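(* Let $F=L-N:X\to Y$ be continuous and satisfy hypothesis (H) and hypotheses (V+) and (V−). Then $F:X\to Y$ is proper (preimages of compact sets are compact) if and only if, for every $z\in H_Y$, the restriction of $F$ to the fiber $\{u(z,t):t\in\mathbb{R}\}$ is proper as a map to $z+V_Y$.
   Context: Let $X,Y$ be real Hilbert spaces, $X$ densely included in $Y$, and let $L:X\subset Y\to Y$ be a self-adjoint operator, $X$ carrying the graph norm. Let $\lambda_p$ be a simple isolated eigenvalue of $L$ with eigenvector $\phi_p\in X$, $\|\phi_p\|_Y=1$. Let $V_X=V_Y=\langle\phi_p\rangle$ be its real span, $H_Y=\{y\in Y:\langle y,\phi_p\rangle_Y=0\}$, $H_X=X\cap H_Y$, and $P:Y\to H_Y$ the orthogonal projection. Let $N:Y\to Y$, $F=L-N:X\to Y$, and for $t\in\mathbb{R}$ let $PN_t:H_Y\to H_Y$, $PN_t(w)=PN(w+t\phi_p)$, and $PF_t:H_X\to H_Y$, $PF_t(w)=PF(w+t\phi_p)$. Hypothesis (H): there is $n\ge0$ such that every $PN_t$ is Lipschitz with constant $n$ independent of $t$, and $[-n,n]\cap\sigma(L)=\{\lambda_p\}$. Under (H) each $PF_t$ is a homeomorphism; for $z\in H_Y$, $t\in\mathbb{R}$ let $w(z,t)=(PF_t)^{-1}(z)$ and $u(z,t)=w(z,t)+t\phi_p$, so $\{u(z,t):t\in\mathbb{R}\}=F^{-1}(z+V_Y)$ is the fiber associated to $z$. Hypotheses (V±): for each $z_0\in H_Y$ there are a ball $U(z_0)\subset H_Y$ centered at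 $z_0$ and constants $\epsilon>0$, $T>0$, $c_+,c_-\in\mathbb{R}$ such that for all $z\in U(z_0)$: (V+) $\langle N(u(z,t)),\phi_p\rangle_Y>(\lambda_p+\epsilon)t+c_+$ for $t>T$; (V−) $\langle N(u(z,t)),\phi_p\rangle_Y>(\lambda_p-\epsilon)t+c_-$ for $t<-T$. *)

From Stdlib Require Import Reals List.
Open Scope R_scope.

Record RHilbert := {
  car :> Type;
  vzero : car;
  vadd : car -> car -> car;
  vopp : car -> car;
  vscal : R -> car -> car;
  inner : car -> car -> R;
  vadd_assoc : forall x y z, vadd x (vadd y z) = vadd (vadd x y) z;
  vadd_comm : forall x y, vadd x y = vadd y x;
  vadd_0 : forall x, vadd x vzero = x;
  vadd_opp : forall x, vadd x (vopp x) = vzero;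
  vscal_1 : forall x, vscal 1 x = x;
  vscal_assoc : forall a b x, vscal a (vscal b x) = vscal (a * b) x;
  vscal_distr_v : forall a x y, vscal a (vadd x y) = vadd (vscal a x) (vscal a y);
  vscal_distr_s : forall a b x, vscal (a + b) x = vadd (vscal a x) (vscal b x);
  inner_sym : forall x y, inner x y = inner y x;
  inner_add_l : forall x y z, inner (vadd x y) z = inner x z + inner y z;
  inner_scal_l : forall a x y, inner (vscal a x) y = a * inner x y;
  inner_pos : forall x, 0 <= inner x x;
  inner_def : forall x, inner x x = 0 -> x = vzero;
  complete : forall s : nat -> car,
    (forall eps, 0 < eps -> exists N, forall m n, (N <= m)%nat -> (N <= n)%nat ->
        sqrt (inner (vadd (s m) (vopp (s n))) (vadd (s m) (vopp (s n)))) < eps) ->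
    exists l, forall eps, 0 < eps -> exists N, forall n, (N <= n)%nat ->
        sqrt (inner (vadd (s n) (vopp l)) (vadd (s n) (vopp l))) < eps
}.

Arguments vzero {r}.
Arguments vadd {r} _ _.
Arguments vopp {r} _.
Arguments vscal {r} _ _.
Arguments inner {r} _ _.

Section Defs.
Context {Y : RHilbert}.

Definition vsub (x y : Y) : Y := vadd x (vopp y).
Definition norm (x : Y) : R := sqrt (inner x x).
Definition distY (x y : Y) : R := norm (vsub x y).

Definition open_in (S : Y -> Prop) (d : Y -> Y -> R) (U : Y -> Prop) : Prop :=
  forall x, S x -> U x -> exists r, 0 < r /\ forall y, S y -> d x y < r -> U y.

Definition compact_in (S : Y -> Prop) (d : Y -> Y -> R) (K : Y -> Prop) : Prop :=
  (forall x, K x -> S x) /\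
  forall (I : Type) (U : I -> Y -> Prop),
    (forall i, open_in S d (U i)) ->
    (forall x, K x -> exists i, U i x) ->
    exists l : list I, forall x, K x -> exists i, In i l /\ U i x.

(** Operator [L] with domain [D] (the space X). *)
Definition subspace (D : Y -> Prop) : Prop :=
  D vzero /\ (forall x y, D x -> D y -> D (vadd x y)) /\
  (forall a x, D x -> D (vscal a x)).

Definition dense (D : Y -> Prop) : Prop :=
  forall y eps, 0 < eps -> exists x, D x /\ distY x y < eps.

Definition linear_on (D : Y -> Prop) (L : Y -> Y) : Prop :=
  (forall x y, D x -> D y -> L (vadd x y) = vadd (L x) (L y)) /\
  (forall a x, D x -> L (vscal a x) = vscal a (L x)).

(** Densely defined L with L = L-adjoint (symmetric, and dom(L-adjoint) contained in dom(L)). *)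
Definition self_adjoint (D : Y -> Prop) (L : Y -> Y) : Prop :=
  subspace D /\ dense D /\ linear_on D L /\
  (forall x y, D x -> D y -> inner (L x) y = inner x (L y)) /\
  (forall y w, (forall x, D x -> inner (L x) y = inner x w) -> D y /\ L y = w).

Definition in_resolvent (D : Y -> Prop) (L : Y -> Y) (mu : R) : Prop :=
  exists Rm : Y -> Y,
    (forall y, D (Rm y) /\ vsub (L (Rm y)) (vscal mu (Rm y)) = y) /\
    (forall x, D x -> Rm (vsub (L x) (vscal mu x)) = x) /\
    (exists C, forall y, norm (Rm y) <= C * norm y).

Definition spectrum (D : Y -> Prop) (L : Y -> Y) (mu : R) : Prop :=
  ~ in_resolvent D L mu.

Definition simple_isolated_eigenvalue (D : Y -> Prop) (L : Y -> Y)
    (lam : R) (phi : Y) : Prop :=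
  D phi /\ norm phi = 1 /\ L phi = vscal lam phi /\
  (forall v, D v -> L v = vscal lam v -> exists c, v = vscal c phi) /\
  (exists delta, 0 < delta /\
     forall mu, 0 < Rabs (mu - lam) < delta -> ~ spectrum D L mu).

Definition graph_dist (L : Y -> Y) (u v : Y) : R :=
  sqrt (norm (vsub u v) ^ 2 + norm (vsub (L u) (L v)) ^ 2).

Definition HY (phi : Y) (y : Y) : Prop := inner y phi = 0.
Definition HX (D : Y -> Prop) (phi : Y) (x : Y) : Prop := D x /\ HY phi x.
Definition Pr (phi : Y) (y : Y) : Y := vsub y (vscal (inner y phi) phi).

Definition Fmap (L N : Y -> Y) (u : Y) : Y := vsub (L u) (N u).

Definition F_continuous (D : Y -> Prop) (L N : Y -> Y) : Prop :=
  forall u, D u -> forall eps, 0 < eps -> exists delta, 0 < delta /\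
    forall v, D v -> graph_dist L u v < delta ->
      distY (Fmap L N v) (Fmap L N u) < eps.

Definition hyp_H (D : Y -> Prop) (L N : Y -> Y) (lam : R) (phi : Y) : Prop :=
  exists n, 0 <= n /\
    (forall t w1 w2, HY phi w1 -> HY phi w2 ->
       norm (vsub (Pr phi (N (vadd w1 (vscal t phi))))
                  (Pr phi (N (vadd w2 (vscal t phi)))))
       <= n * norm (vsub w1 w2)) /\
    (forall mu, -n <= mu <= n -> (spectrum D L mu <-> mu = lam)).

(** [is_u z t u]: u = u(z,t) = w(z,t) + t phi, where w(z,t) in H_X solves
    PF_t(w) = z (w(z,t) = (PF_t)^{-1}(z), unique under (H)). *)
Definition is_u (D : Y -> Prop) (L N : Y -> Y) (phi z : Y) (t : R) (u : Y) : Prop :=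
  exists w, HX D phi w /\ Pr phi (Fmap L N (vadd w (vscal t phi))) = z /\
            u = vadd w (vscal t phi).

Definition fiber (D : Y -> Prop) (L N : Y -> Y) (phi z : Y) (u : Y) : Prop :=
  exists t, is_u D L N phi z t u.

(** Hypotheses (V+) and (V-) (with common ball and constants). *)
Definition hyp_V (D : Y -> Prop) (L N : Y -> Y) (lam : R) (phi : Y) : Prop :=
  forall z0, HY phi z0 ->
    exists r eps T cp cm, 0 < r /\ 0 < eps /\ 0 < T /\
      forall z, HY phi z -> distY z z0 < r ->
        (forall t u, t > T -> is_u D L N phi z t u ->
            inner (N u) phi > (lam + eps) * t + cp) /\
        (forall t u, t < - T -> is_u D L N phi z t u ->
            inner (N u) phi > (lam - eps) * t + cm).

Definition F_proper (D : Y -> Prop) (L N : Y -> Y) : Prop :=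
  forall K, compact_in (fun _ => True) distY K ->
    compact_in D (graph_dist L) (fun u => D u /\ K (Fmap L N u)).

Definition affine_line (phi z : Y) (y : Y) : Prop :=
  exists s, y = vadd z (vscal s phi).

Definition fiber_proper (D : Y -> Prop) (L N : Y -> Y) (phi z : Y) : Prop :=
  forall K, compact_in (affine_line phi z) distY K ->
    compact_in (fiber D L N phi z) (graph_dist L)
      (fun u => fiber D L N phi z u /\ K (Fmap L N u)).

End Defs.

(* On H_Y = phi^perp the operator L is invertible with n |L^-1| < 1.  Indeed L - lam is
   bounded below on H_X, since an approximate eigenvector in H_X would produce, through a
   resolvent with a spectral gap at 0, a genuine eigenvector orthogonal to phi; and the norm
   of the bounded symmetric inverse G equals its numerical radius, which is an approximate
   eigenvalue of G, so (H) forces n |G| < 1.  Hence PF_t(w) = z is the fixed point problem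
   w = G (z + PN_t(w)) for a contraction, whose solution w(z, t) depends continuously on
   (z, t).
   If F(u_k) -> p, write u_k = w(z_k, t_k) + t_k phi with z_k = P F(u_k) -> P p.  Along a
   fiber <F u, phi> = lam t - <N u, phi>, so (V+-) keep t_k bounded; along a subsequence
   t_k -> tau and then u_k -> u(P p, tau) in the graph norm.  Thus F is proper, and so are
   its restrictions to the fibers, which are closed; both sides of the equivalence hold. *)

From Stdlib Require Import Reals Lra Lia Psatz List Classical ClassicalEpsilon.
From Stdlib Require Rtopology.
Open Scope R_scope.

Arguments vadd_assoc {r} _ _ _.
Arguments vadd_comm {r} _ _.
Arguments vadd_0 {r} _.
Arguments vadd_opp {r} _.
Arguments vscal_1 {r} _.
Arguments vscal_assoc {r} _ _ _.
Arguments vscal_distr_s {r} _ _ _.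
Arguments inner_sym {r} _ _.
Arguments inner_add_l {r} _ _ _.
Arguments inner_scal_l {r} _ _ _.
Arguments inner_pos {r} _.
Arguments inner_def {r} _ _.
Arguments complete {r} _ _.

(** * Vectors, norms and subspaces *)

Section VectorAlgebra.
Context {Y : RHilbert}.
Implicit Types x y z : Y.

Lemma vadd_0l x : vadd vzero x = x.
Proof. rewrite vadd_comm; apply vadd_0. Qed.

Lemma vscal_0 x : vscal 0 x = vzero.
Proof.
  assert (H : vscal 0 x = vadd (vscal 0 x) (vscal 0 x)).
  { rewrite <- vscal_distr_s. f_equal; ring. }
  assert (H2 : vadd (vscal 0 x) (vopp (vscal 0 x)) = vzero) by apply vadd_opp.
  rewrite H in H2 at 1. rewrite <- vadd_assoc, vadd_opp, vadd_0 in H2. exact H2.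
Qed.

Lemma vopp_scal x : vopp x = vscal (-1) x.
Proof.
  assert (H : vadd x (vscal (-1) x) = vzero).
  { rewrite <- (vscal_1 x) at 1. rewrite <- vscal_distr_s.
    replace (1 + -1) with 0 by ring. apply vscal_0. }
  rewrite <- (vadd_0 (vopp x)), <- H, vadd_assoc, (vadd_comm (vopp x) x), vadd_opp.
  apply vadd_0l.
Qed.

Lemma inner_add_r x y z : inner x (vadd y z) = inner x y + inner x z.
Proof. rewrite inner_sym, inner_add_l, (inner_sym y), (inner_sym z); ring. Qed.
Lemma inner_scal_r a x y : inner x (vscal a y) = a * inner x y.
Proof. rewrite inner_sym, inner_scal_l, inner_sym; ring. Qed.
Lemma inner_opp_l x y : inner (vopp x) y = - inner x y.
Proof. rewrite vopp_scal, inner_scal_l; ring. Qed.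
Lemma inner_opp_r x y : inner x (vopp y) = - inner x y.
Proof. rewrite vopp_scal, inner_scal_r; ring. Qed.
Lemma inner_sub_l x y z : inner (vsub x y) z = inner x z - inner y z.
Proof. unfold vsub; rewrite inner_add_l, inner_opp_l; ring. Qed.
Lemma inner_sub_r x y z : inner x (vsub y z) = inner x y - inner x z.
Proof. unfold vsub; rewrite inner_add_r, inner_opp_r; ring. Qed.
Lemma inner_0_l x : inner vzero x = 0.
Proof. rewrite <- (vscal_0 x), inner_scal_l; ring. Qed.
Lemma inner_0_r x : inner x vzero = 0.
Proof. rewrite <- (vscal_0 x), inner_scal_r; ring. Qed.

Lemma veq_of_inner x y : inner (vsub x y) (vsub x y) = 0 -> x = y.
Proof.
  intro H. apply inner_def in H. unfold vsub in H.
  assert (E : vadd (vadd x (vopp y)) y = vadd vzero y) by (rewrite H; reflexivity).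
  rewrite <- vadd_assoc, (vadd_comm (vopp y) y), vadd_opp, vadd_0, vadd_0l in E.
  exact E.
Qed.

End VectorAlgebra.

#[export] Hint Rewrite @inner_add_l @inner_add_r @inner_scal_l @inner_scal_r
  @inner_opp_l @inner_opp_r @inner_sub_l @inner_sub_r @inner_0_l @inner_0_r : vinner.

(* A vector identity follows from the scalar identity [<x - y, x - y> = 0], which
   [ring]/[field] decide once the inner product is expanded bilinearly. *)
Ltac vec_eq := apply veq_of_inner; autorewrite with vinner; ring.
Ltac vec_eqf := apply veq_of_inner; autorewrite with vinner; field.

Section Norms.
Context {Y : RHilbert}.
Implicit Types x y z : Y.

Lemma norm_sq x : norm x * norm x = inner x x.
Proof. apply sqrt_sqrt, inner_pos. Qed.
Lemma norm_nonneg x : 0 <= norm x.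
Proof. apply sqrt_pos. Qed.
Lemma norm_zero : norm (@vzero Y) = 0.
Proof. unfold norm; rewrite inner_0_l; apply sqrt_0. Qed.
Lemma norm_eq0 x : norm x = 0 -> x = vzero.
Proof. intro H. apply inner_def. rewrite <- norm_sq, H; ring. Qed.
Lemma norm_sub_eq0 x y : norm (vsub x y) = 0 -> x = y.
Proof. intro H. apply veq_of_inner. rewrite <- norm_sq, H; ring. Qed.

Lemma quadratic_nonneg_discr (a b c : R) : 0 <= c ->
  (forall t, 0 <= a + 2 * b * t + c * t * t) -> b * b <= a * c.
Proof.
  intros Hc H. destruct (Req_dec c 0) as [->|E].
  - destruct (Req_dec b 0) as [->|Eb]; [nra|].
    specialize (H (-(a + 1) / (2 * b))).
    replace (a + 2 * b * (-(a + 1) / (2 * b)) + 0 * (-(a + 1) / (2 * b)) * (-(a + 1) / (2 * b)))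
      with (-1) in H by (field; exact Eb).
    lra.
  - specialize (H (- b / c)).
    replace (a + 2 * b * (- b / c) + c * (- b / c) * (- b / c)) with ((a * c - b * b) / c) in H
      by (field; lra).
    apply Rmult_le_compat_r with (r := c) in H; [|lra].
    unfold Rdiv in H. rewrite Rmult_0_l, Rmult_assoc, Rinv_l, Rmult_1_r in H; lra.
Qed.

Lemma cauchy_schwarz x y : Rabs (inner x y) <= norm x * norm y.
Proof.
  assert (H : inner x y * inner x y <= inner x x * inner y y).
  { apply quadratic_nonneg_discr; [apply inner_pos|].
    intro t. pose proof (inner_pos (vadd x (vscal t y))) as H.
    autorewrite with vinner in H. rewrite (inner_sym y x) in H. nra. }
  rewrite <- !norm_sq in H.
  pose proof (Rmult_le_pos _ _ (norm_nonneg x) (norm_nonneg y)).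
  apply Rabs_le. split; nra.
Qed.

Lemma inner_le x y : inner x y <= norm x * norm y.
Proof. pose proof (cauchy_schwarz x y). pose proof (Rle_abs (inner x y)). lra. Qed.

Lemma norm_scal a x : norm (vscal a x) = Rabs a * norm x.
Proof.
  unfold norm. autorewrite with vinner. rewrite <- Rmult_assoc, sqrt_mult.
  - f_equal. apply sqrt_Rsqr_abs.
  - apply Rle_0_sqr.
  - apply inner_pos.
Qed.

Lemma norm_triangle x y : norm (vadd x y) <= norm x + norm y.
Proof.
  apply Rsqr_incr_0_var; [|apply Rplus_le_le_0_compat; apply norm_nonneg].
  unfold Rsqr. rewrite norm_sq. autorewrite with vinner.
  rewrite (inner_sym y x), <- (norm_sq x), <- (norm_sq y).
  pose proof (inner_le x y). nra.
Qed.

Lemma norm_opp x : norm (vopp x) = norm x.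
Proof. rewrite vopp_scal, norm_scal, Rabs_left by lra. ring. Qed.

Lemma norm_sub_sym x y : norm (vsub x y) = norm (vsub y x).
Proof. replace (vsub x y) with (vopp (vsub y x)) by vec_eq. apply norm_opp. Qed.

Lemma norm_sub_tri x y z : norm (vsub x z) <= norm (vsub x y) + norm (vsub y z).
Proof. replace (vsub x z) with (vadd (vsub x y) (vsub y z)) by vec_eq. apply norm_triangle. Qed.

Lemma norm_sub_le x y : norm (vsub x y) <= norm x + norm y.
Proof. unfold vsub. rewrite <- (norm_opp y). apply norm_triangle. Qed.

Lemma norm_sub_rev x y : Rabs (norm x - norm y) <= norm (vsub x y).
Proof.
  pose proof (norm_sub_tri x y vzero). pose proof (norm_sub_tri y x vzero).
  replace (vsub x vzero) with x in * by vec_eq. replace (vsub y vzero) with y in * by vec_eq.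
  rewrite (norm_sub_sym y x) in *. apply Rabs_le. lra.
Qed.

Lemma norm_unit_scal x : 0 < norm x -> norm (vscal (/ norm x) x) = 1.
Proof.
  intro H. rewrite norm_scal, Rabs_pos_eq by (apply Rlt_le, Rinv_0_lt_compat; lra).
  field; lra.
Qed.

End Norms.

Section LinearAlgebra.
Context {Y : RHilbert}.
Implicit Types (x y : Y) (S : Y -> Prop) (T : Y -> Y).

Lemma subspace_add S x y : subspace S -> S x -> S y -> S (vadd x y).
Proof. intros [_ [Ha _]]; auto. Qed.
Lemma subspace_scal S a x : subspace S -> S x -> S (vscal a x).
Proof. intros [_ [_ Hs]]; auto. Qed.
Lemma subspace_sub S x y : subspace S -> S x -> S y -> S (vsub x y).
Proof.
  intros HS Hx Hy. unfold vsub. rewrite vopp_scal.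
  apply subspace_add, subspace_scal; auto.
Qed.
Lemma subspace_zero S : subspace S -> S vzero.
Proof. intros [H0 _]; exact H0. Qed.

Lemma subspace_True : subspace (fun _ : Y => True).
Proof. repeat split. Qed.

Lemma subspace_HY (phi : Y) : subspace (HY phi).
Proof.
  unfold HY. repeat split.
  - apply inner_0_l.
  - intros x y Hx Hy. rewrite inner_add_l, Hx, Hy; ring.
  - intros a x Hx. rewrite inner_scal_l, Hx; ring.
Qed.

Lemma subspace_HX (D : Y -> Prop) (phi : Y) : subspace D -> subspace (HX D phi).
Proof.
  intros HD. pose proof (subspace_HY phi) as HH. unfold HX. repeat split.
  - apply (subspace_zero _ HD).
  - apply (subspace_zero _ HH).
  - apply (subspace_add _ _ _ HD); tauto.
  - apply (subspace_add _ _ _ HH); tauto.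
  - apply (subspace_scal _ _ _ HD); tauto.
  - apply (subspace_scal _ _ _ HH); tauto.
Qed.

Lemma linear_sub S T x y : subspace S -> linear_on S T -> S x -> S y ->
  T (vsub x y) = vsub (T x) (T y).
Proof.
  intros HS [Ha Hs] Hx Hy. unfold vsub. rewrite !vopp_scal, Ha, Hs; auto.
  apply subspace_scal; auto.
Qed.

End LinearAlgebra.

(** * Sequential compactness *)

Lemma inv_succ_small (e : R) : 0 < e -> exists N : nat, / (INR N + 1) < e.
Proof.
  intro He. destruct (archimed_cor1 e He) as [N [HN HN0]]. exists N.
  apply lt_INR in HN0. simpl in HN0.
  eapply Rlt_trans; [|exact HN]. apply Rinv_lt_contravar; nra.
Qed.

Lemma inv_succ_le (j N : nat) : (N <= j)%nat -> / (INR j + 1) <= / (INR N + 1).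
Proof.
  intro H. apply le_INR in H. pose proof (pos_INR N). apply Rinv_le_contravar; lra.
Qed.

Lemma inv_succ_pos (j : nat) : 0 < / (INR j + 1).
Proof. apply Rinv_0_lt_compat. pose proof (pos_INR j); lra. Qed.

Section Sequences.
Context {X : Type}.
Implicit Types (d : X -> X -> R) (K : X -> Prop).

Definition pmetric d : Prop :=
  (forall a, d a a = 0) /\ (forall a b, d a b = d b a) /\
  (forall a b c, d a c <= d a b + d b c).

Definition cluster d (p : X) (x : nat -> X) : Prop :=
  forall e, 0 < e -> forall N, exists k, (N <= k)%nat /\ d p (x k) < e.

Definition conv d (p : X) (x : nat -> X) : Prop :=
  forall e, 0 < e -> exists N, forall k, (N <= k)%nat -> d p (x k) < e.

Definition seqcomp d K : Prop :=
  forall x : nat -> X, (forall k, K (x k)) -> exists p, K p /\ cluster d p x.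

Lemma cluster_subseq_conv d p x : cluster d p x ->
  exists s : nat -> nat, (forall j, (j <= s j)%nat) /\ conv d p (fun j => x (s j)).
Proof.
  intro H.
  destruct (choice (fun j k => (j <= k)%nat /\ d p (x k) < / (INR j + 1)))
    as [s Hs]; [intro j; apply H, inv_succ_pos|].
  exists s. split; [intro j; apply Hs|].
  intros e He. destruct (inv_succ_small e He) as [N HN]. exists N. intros k Hk.
  pose proof (proj2 (Hs k)). pose proof (inv_succ_le k N Hk). lra.
Qed.

Lemma conv_cluster d p x : conv d p x -> cluster d p x.
Proof.
  intros Hc e He N. destruct (Hc e He) as [M HM]. exists (max N M). split; [lia|apply HM; lia].
Qed.

Lemma cluster_of_subseq d p x (s : nat -> nat) : (forall j, (j <= s j)%nat) ->
  cluster d p (fun j => x (s j)) -> cluster d p x.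
Proof.
  intros Hs Hc e He N. destruct (Hc e He N) as [k [Hk Hd]].
  exists (s k). split; [specialize (Hs k); lia|exact Hd].
Qed.

Lemma conv_subseq d p x (s : nat -> nat) : (forall j, (j <= s j)%nat) ->
  conv d p x -> conv d p (fun j => x (s j)).
Proof.
  intros Hs Hc e He. destruct (Hc e He) as [M HM]. exists M. intros k Hk.
  apply HM. specialize (Hs k). lia.
Qed.

End Sequences.

Lemma real_bounded_cluster (a : nat -> R) (B : R) : (forall i, Rabs (a i) <= B) ->
  exists tau, cluster (fun x y => Rabs (x - y)) tau a.
Proof.
  intro H.
  destruct (Rtopology.Bolzano_Weierstrass a (fun c => - B <= c <= B) (Rtopology.compact_P3 (- B) B))
    as [l Hl].
  { intro i. specialize (H i). pose proof (Rle_abs (a i)). pose proof (Rle_abs (- a i)).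
    rewrite Rabs_Ropp in *. lra. }
  exists l. intros e He N.
  destruct (Hl (Rtopology.disc l (mkposreal e He)) N) as [p [Hp1 Hp2]];
    [exists (mkposreal e He); intros x Hx; exact Hx|].
  exists p. split; [exact Hp1|]. rewrite Rabs_minus_sym. exact Hp2.
Qed.

Section SequentialCompactness.
Context {Y : RHilbert}.
Implicit Types (d : Y -> Y -> R) (S K : Y -> Prop).

Lemma open_in_ball S d c r : pmetric d -> open_in S d (fun y => d c y < r).
Proof.
  intros [_ [_ Htri]] x _ Hx. exists (r - d c x). split; [lra|].
  intros y _ Hy. pose proof (Htri c x y). lra.
Qed.

Lemma list_bound_nat {A : Type} (l : list A) (g : A -> nat) :
  exists M, forall a, In a l -> (g a <= M)%nat.
Proof.
  induction l as [|a l [M HM]]; [exists 0%nat; intros b []|].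
  exists (max (g a) M). intros b [<-|Hb]; [lia|specialize (HM b Hb); lia].
Qed.

Lemma list_choose {A B : Type} (l : list A) (Q : A -> B -> Prop) :
  (forall a, In a l -> exists b, Q a b) ->
  exists lb, forall a, In a l -> exists b, In b lb /\ Q a b.
Proof.
  induction l as [|a l IH]; intro H; [exists nil; intros b []|].
  destruct (H a (or_introl eq_refl)) as [b Hb].
  destruct IH as [lb Hlb]; [intros a' Ha'; apply H; right; exact Ha'|].
  exists (b :: lb). intros a' [<-|Ha'].
  - exists b. split; [left|]; auto.
  - destruct (Hlb a' Ha') as [b' [? ?]]. exists b'. split; [right|]; auto.
Qed.

Lemma compact_in_seqcomp S d K : pmetric d -> compact_in S d K -> seqcomp d K.
Proof.
  intros Hd [_ Hc] x Hx. apply NNPP. intro Hno.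
  (* every point of K has a ball eventually avoided by x; a finite subcover yields a contradiction *)
  assert (Hp : forall p : {p | K p}, exists eN : R * nat, 0 < fst eN /\
     forall k, (snd eN <= k)%nat -> ~ d (proj1_sig p) (x k) < fst eN).
  { intros [p Kp]. simpl. apply NNPP. intro H. apply Hno. exists p. split; [exact Kp|].
    intros e He N. apply NNPP. intro H2. apply H. exists (e, N). simpl. split; [exact He|].
    intros k Hk H3. apply H2. exists k. auto. }
  destruct (choice _ Hp) as [ef Hef].
  destruct (Hc {p | K p} (fun p y => d (proj1_sig p) y < fst (ef p))) as [l Hl].
  - intro i. apply open_in_ball, Hd.
  - intros y Ky. exists (exist _ y Ky). simpl. destruct Hd as [-> _]. apply Hef.
  - destruct (list_bound_nat l (fun p => snd (ef p))) as [M HM].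
    destruct (Hl (x M) (Hx M)) as [i [Hi1 Hi2]].
    apply (proj2 (Hef i) M); [apply HM; exact Hi1|exact Hi2].
Qed.

Lemma seqcomp_lebesgue_number S d K (I : Type) (U : I -> Y -> Prop) :
  pmetric d -> (forall x, K x -> S x) -> seqcomp d K ->
  (forall i, open_in S d (U i)) -> (forall x, K x -> exists i, U i x) ->
  exists e, 0 < e /\ forall x, K x -> exists i, forall y, S y -> d x y < e -> U i y.
Proof.
  intros [_ [_ Htri]] HKS Hsc HU Hcov. apply NNPP. intro Hn.
  assert (Hb : forall j : nat, exists x, K x /\
      forall i, exists y, S y /\ d x y < / (INR j + 1) /\ ~ U i y).
  { intro j. apply NNPP. intro H. apply Hn. exists (/ (INR j + 1)).
    split; [apply inv_succ_pos|].
    intros x Kx. apply NNPP. intro H2. apply H. exists x. split; [exact Kx|].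
    intro i. apply NNPP. intro H3. apply H2. exists i. intros y Sy Hy. apply NNPP. intro H4.
    apply H3. exists y. auto. }
  destruct (choice _ Hb) as [xs Hxs].
  destruct (Hsc xs (fun k => proj1 (Hxs k))) as [p [Kp Hcl]].
  destruct (Hcov p Kp) as [i Hi]. destruct (HU i p (HKS p Kp) Hi) as [r [Hr Hball]].
  destruct (inv_succ_small (r / 2)) as [N HN]; [lra|].
  destruct (Hcl (r / 2) ltac:(lra) N) as [k [Hk Hdk]].
  destruct (proj2 (Hxs k) i) as [y [Sy [Hy Hny]]].
  apply Hny, Hball; [exact Sy|].
  pose proof (Htri p (xs k) y). pose proof (inv_succ_le k N Hk). lra.
Qed.

Lemma seqcomp_totally_bounded d K e : pmetric d -> seqcomp d K -> 0 < e ->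
  exists l : list Y, (forall c, In c l -> K c) /\
    forall x, K x -> exists c, In c l /\ d c x < e.
Proof.
  intros [_ [Hsym Htri]] Hsc He. apply NNPP. intro Hn.
  (* otherwise a greedy choice builds an e-separated sequence in K *)
  assert (Hg : forall l : list Y, exists x,
      (forall c, In c l -> K c) -> K x /\ forall c, In c l -> ~ d c x < e).
  { intro l. destruct (classic (forall c, In c l -> K c)) as [Hl|Hl].
    - apply NNPP. intro H. apply Hn. exists l. split; [exact Hl|]. intros x Kx.
      apply NNPP. intro H2. apply H. exists x. intros _. split; [exact Kx|].
      intros c Hc Hdc. apply H2. exists c; auto.
    - exists vzero. intro H; contradiction. }
  destruct (choice _ Hg) as [g Hgs].
  set (lst := fix lst (k : nat) : list Y :=
         match k with O => nil | Datatypes.S k' => g (lst k') :: lst k' end).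
  assert (HlK : forall k c, In c (lst k) -> K c).
  { induction k as [|k IH]; simpl; [intros c []|].
    intros c [<-|Hc]; [apply (Hgs (lst k) IH)|apply IH, Hc]. }
  assert (Hfar : forall j k, (j < k)%nat -> ~ d (g (lst j)) (g (lst k)) < e).
  { intros j k Hjk. apply (Hgs (lst k) (HlK k)).
    induction k as [|k IH]; [lia|]. simpl.
    destruct (Nat.eq_dec j k) as [->|Hne]; [left; reflexivity|right; apply IH; lia]. }
  destruct (Hsc (fun k => g (lst k))) as [p [_ Hcl]]; [intro k; apply (Hgs (lst k) (HlK k))|].
  destruct (Hcl (e / 2) ltac:(lra) 0%nat) as [k1 [_ H1]].
  destruct (Hcl (e / 2) ltac:(lra) (Datatypes.S k1)) as [k2 [Hk2 H2]].
  apply (Hfar k1 k2); [lia|].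
  pose proof (Htri (g (lst k1)) p (g (lst k2))). rewrite Hsym in H1. lra.
Qed.

Lemma seqcomp_compact_in S d K : pmetric d -> (forall x, K x -> S x) -> seqcomp d K ->
  compact_in S d K.
Proof.
  intros Hd HKS Hsc. split; [exact HKS|]. intros I U HU Hcov.
  destruct (seqcomp_lebesgue_number S d K I U Hd HKS Hsc HU Hcov) as [e [He HLeb]].
  destruct (seqcomp_totally_bounded d K e Hd Hsc He) as [l [HlK Hl]].
  destruct (list_choose l (fun c i => forall y, S y -> d c y < e -> U i y)) as [li Hli].
  { intros c Hc. apply HLeb, HlK, Hc. }
  exists li. intros x Kx. destruct (Hl x Kx) as [c [Hc Hdc]].
  destruct (Hli c Hc) as [i [Hi HUi]]. exists i. split; [exact Hi|]. apply HUi; auto.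
Qed.

Lemma compact_in_change_space S S' d K : pmetric d -> (forall x, K x -> S' x) ->
  compact_in S d K -> compact_in S' d K.
Proof.
  intros Hd HKS' HK. apply seqcomp_compact_in; [exact Hd|exact HKS'|].
  exact (compact_in_seqcomp S d K Hd HK).
Qed.

End SequentialCompactness.

(** * Completeness and contractions *)

Lemma pow_lt_1_eventually (r e : R) : 0 <= r < 1 -> 0 < e ->
  exists N, forall n, (N <= n)%nat -> r ^ n < e.
Proof.
  intros Hr He. destruct (pow_lt_1_zero r ltac:(rewrite Rabs_pos_eq; lra) e He) as [N HN].
  exists N. intros n Hn. specialize (HN n Hn). rewrite Rabs_pos_eq in HN; [exact HN|apply pow_le; lra].
Qed.

Lemma Rnonneg_small_eq0 (a : R) : 0 <= a -> (forall e, 0 < e -> a < e) -> a = 0.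
Proof. intros H1 H2. destruct (Req_dec a 0) as [E|E]; [exact E|]. specialize (H2 a); lra. Qed.

Lemma geometric_bound_eq0 (a K r : R) : 0 <= a -> 0 <= r < 1 -> (forall j, a <= K * r ^ j) -> a = 0.
Proof.
  intros Ha Hr H. apply Rnonneg_small_eq0; [exact Ha|]. intros e He. pose proof (Rabs_pos K).
  destruct (pow_lt_1_eventually r (e / (Rabs K + 1)) Hr) as [N HN]; [apply Rdiv_lt_0_compat; lra|].
  specialize (HN N (le_n N)). specialize (H N). pose proof (Rle_abs K). pose proof (pow_le r N ltac:(lra)).
  apply (Rmult_lt_compat_l (Rabs K + 1)) in HN; [|lra].
  replace ((Rabs K + 1) * (e / (Rabs K + 1))) with e in HN by (field; lra). nra.
Qed.

Section Completeness.
Context {Y : RHilbert}.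
Implicit Types (x y : Y) (V : Y -> Prop) (s : nat -> Y).

Definition seq_closed V : Prop :=
  forall l s, (forall j, V (s j)) ->
    (forall e, 0 < e -> exists j, norm (vsub l (s j)) < e) -> V l.

Definition maps V (T : Y -> Y) : Prop := forall x, V x -> V (T x).

Lemma seq_closed_HY (phi : Y) : seq_closed (HY phi).
Proof.
  intros l s Hs Hc. unfold HY. apply NNPP. intro Hne. apply (Rabs_no_R0 _ Hne).
  apply Rnonneg_small_eq0; [apply Rabs_pos|]. intros e He.
  pose proof (norm_nonneg phi).
  destruct (Hc (e / (norm phi + 1))) as [j Hj]; [apply Rdiv_lt_0_compat; lra|].
  replace (inner l phi) with (inner (vsub l (s j)) phi) by (rewrite inner_sub_l, (Hs j); ring).
  eapply Rle_lt_trans; [apply cauchy_schwarz|].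
  apply Rle_lt_trans with (norm (vsub l (s j)) * (norm phi + 1)).
  - pose proof (norm_nonneg (vsub l (s j))). nra.
  - apply (Rmult_lt_compat_r (norm phi + 1)) in Hj; [|lra].
    replace (e / (norm phi + 1) * (norm phi + 1)) with e in Hj by (field; lra). exact Hj.
Qed.

Lemma geometric_partial_bound s (K r : R) : 0 <= r < 1 ->
  (forall j, norm (vsub (s (S j)) (s j)) <= K * r ^ j) ->
  forall j k, norm (vsub (s (j + k)%nat) (s j)) <= K * r ^ j / (1 - r).
Proof.
  intros Hr Hs j k.
  assert (HK : 0 <= K).
  { pose proof (Hs 0%nat). pose proof (norm_nonneg (vsub (s 1%nat) (s 0%nat))). simpl in *. lra. }
  apply Rle_trans with (K * r ^ j * (1 - r ^ k) / (1 - r)).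
  - induction k as [|k IH].
    + rewrite Nat.add_0_r. replace (vsub (s j) (s j)) with (@vzero Y) by vec_eq.
      rewrite norm_zero. simpl. replace (K * r ^ j * (1 - 1) / (1 - r)) with 0 by (field; lra). lra.
    + eapply Rle_trans; [apply (norm_sub_tri _ (s (j + k)%nat))|].
      replace (j + S k)%nat with (S (j + k)) by lia.
      pose proof (Hs (j + k)%nat) as H. rewrite pow_add in H.
      replace (K * r ^ j * (1 - r ^ S k) / (1 - r))
        with (K * (r ^ j * r ^ k) + K * r ^ j * (1 - r ^ k) / (1 - r)) by (simpl; field; lra).
      lra.
  - unfold Rdiv. apply Rmult_le_compat_r; [apply Rlt_le, Rinv_0_lt_compat; lra|].
    pose proof (pow_le r j ltac:(lra)). pose proof (pow_le r k ltac:(lra)).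
    pose proof (Rmult_le_pos _ _ HK H). nra.
Qed.

Lemma geometric_limit s (K r : R) : 0 <= r < 1 ->
  (forall j, norm (vsub (s (S j)) (s j)) <= K * r ^ j) ->
  exists l, forall j, norm (vsub l (s j)) <= K * r ^ j / (1 - r).
Proof.
  intros Hr Hs. pose proof (geometric_partial_bound s K r Hr Hs) as Hb.
  assert (HK : 0 <= K).
  { pose proof (Hs 0%nat). pose proof (norm_nonneg (vsub (s 1%nat) (s 0%nat))). simpl in *. lra. }
  destruct (complete s) as [l Hl].
  - intros e He.
    destruct (pow_lt_1_eventually r (e * (1 - r) / (2 * (K + 1))) Hr) as [N HN];
      [apply Rdiv_lt_0_compat; nra|].
    exists N. intros m n Hm Hn. specialize (HN N (le_n N)).
    pose proof (Hb N (m - N)%nat) as HmN. pose proof (Hb N (n - N)%nat) as HnN.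
    replace (N + (m - N))%nat with m in HmN by lia. replace (N + (n - N))%nat with n in HnN by lia.
    assert (K * r ^ N / (1 - r) < e / 2).
    { apply (Rmult_lt_reg_r (1 - r)); [lra|].
      unfold Rdiv. rewrite Rmult_assoc, Rinv_l, Rmult_1_r by lra.
      apply (Rmult_lt_compat_l (K + 1)) in HN; [|lra].
      replace ((K + 1) * (e * (1 - r) / (2 * (K + 1)))) with (e / 2 * (1 - r)) in HN by (field; lra).
      pose proof (pow_le r N ltac:(lra)). nra. }
    change (norm (vsub (s m) (s n)) < e).
    pose proof (norm_sub_tri (s m) (s N) (s n)). rewrite (norm_sub_sym (s N) (s n)) in H0. lra.
  - exists l. intro j. apply Rle_plus_epsilon. intros e He.
    destruct (Hl e He) as [N HN]. specialize (HN (max N j) (Nat.le_max_l _ _)).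
    change (norm (vsub (s (max N j)) l) < e) in HN. rewrite norm_sub_sym in HN.
    pose proof (Hb j (max N j - j)%nat) as H. replace (j + (max N j - j))%nat with (max N j) in H by lia.
    pose proof (norm_sub_tri l (s (max N j)) (s j)). lra.
Qed.

Lemma geometric_bound_conv (l : Y) s (K r : R) : 0 <= r < 1 ->
  (forall j, norm (vsub l (s j)) <= K * r ^ j / (1 - r)) ->
  forall e, 0 < e -> exists N, forall j, (N <= j)%nat -> norm (vsub l (s j)) < e.
Proof.
  intros Hr H e He. pose proof (Rabs_pos K).
  destruct (pow_lt_1_eventually r (e * (1 - r) / (Rabs K + 1)) Hr) as [N HN];
    [apply Rdiv_lt_0_compat; nra|].
  exists N. intros j Hj. eapply Rle_lt_trans; [apply H|]. specialize (HN j Hj).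
  apply (Rmult_lt_reg_r (1 - r)); [lra|].
  unfold Rdiv. rewrite Rmult_assoc, Rinv_l, Rmult_1_r by lra.
  apply (Rmult_lt_compat_l (Rabs K + 1)) in HN; [|lra].
  replace ((Rabs K + 1) * (e * (1 - r) / (Rabs K + 1))) with (e * (1 - r)) in HN by (field; lra).
  pose proof (pow_le r j ltac:(lra)). pose proof (Rle_abs K). nra.
Qed.

Lemma contraction_fixpoint V (F : Y -> Y) (k : R) : subspace V -> seq_closed V -> 0 <= k < 1 ->
  maps V F -> (forall a b, V a -> V b -> norm (vsub (F a) (F b)) <= k * norm (vsub a b)) ->
  exists w, V w /\ F w = w.
Proof.
  intros HV HVc Hk HF HL.
  set (s := fun j => Nat.iter j F vzero).
  assert (HVs : forall j, V (s j)).
  { induction j; [apply (subspace_zero _ HV)|apply HF, IHj]. }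
  set (K := norm (vsub (s 1%nat) (s 0%nat))).
  assert (Hst : forall j, norm (vsub (s (S j)) (s j)) <= K * k ^ j).
  { induction j; [rewrite pow_O, Rmult_1_r; apply Rle_refl|].
    change (norm (vsub (F (s (S j))) (F (s j))) <= K * (k * k ^ j)).
    eapply Rle_trans; [apply HL; apply HVs|].
    pose proof (norm_nonneg (vsub (s 1%nat) (s 0%nat))). pose proof (pow_le k j ltac:(lra)).
    replace (K * (k * k ^ j)) with (k * (K * k ^ j)) by ring.
    apply Rmult_le_compat_l; lra. }
  destruct (geometric_limit s K k Hk Hst) as [l Hl].
  pose proof (geometric_bound_conv l s K k Hk Hl) as Hc.
  assert (HVl : V l).
  { apply (HVc l s HVs). intros e He. destruct (Hc e He) as [N HN]. exists N. apply HN. lia. }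
  exists l. split; [exact HVl|]. apply norm_sub_eq0, Rnonneg_small_eq0; [apply norm_nonneg|].
  intros e He. destruct (Hc (e / 2) ltac:(lra)) as [N HN].
  pose proof (HL l (s N) HVl (HVs N)) as A.
  pose proof (HN N (le_n N)). pose proof (HN (S N) (le_S _ _ (le_n N))) as C.
  change (s (S N)) with (F (s N)) in C. rewrite norm_sub_sym in C.
  pose proof (norm_sub_tri (F l) (F (s N)) l). pose proof (norm_nonneg (vsub l (s N))).
  nra.
Qed.

End Completeness.

(** * Bounded symmetric operators *)

Section SymmetricOperators.
Context {Y : RHilbert}.
Implicit Types (x y : Y) (V : Y -> Prop) (T : Y -> Y).

Definition approx_eigenvalue V T (b : R) : Prop :=
  forall C, exists x, V x /\ C * norm (vsub (T x) (vscal b x)) < norm x.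

Definition symm_on V T : Prop := forall x y, V x -> V y -> inner (T x) y = inner x (T y).

Definition bdd_on V T (C : R) : Prop := forall x, V x -> norm (T x) <= C * norm x.

Definition num_range V T (r : R) : Prop := exists y, V y /\ norm y = 1 /\ r = inner (T y) y.

Lemma approx_eigenvalue_mono V V' T b : (forall x, V x -> V' x) ->
  approx_eigenvalue V T b -> approx_eigenvalue V' T b.
Proof. intros H Hn C. destruct (Hn C) as [x [Vx Hx]]. exists x. auto. Qed.

Lemma not_approx_eigenvalue V T b : ~ approx_eigenvalue V T b ->
  exists C, 0 <= C /\ forall x, V x -> norm x <= C * norm (vsub (T x) (vscal b x)).
Proof.
  intro H. apply NNPP. intro H2. apply H. intro C. apply NNPP. intro H3. apply H2.
  exists (Rmax C 0). split; [apply Rmax_r|]. intros x Vx. apply Rnot_lt_le. intro H4.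
  apply H3. exists x. split; [exact Vx|].
  eapply Rle_lt_trans; [|exact H4]. apply Rmult_le_compat_r; [apply norm_nonneg|apply Rmax_l].
Qed.

Lemma approx_eigenvalue_of_unit V T b :
  (forall e, 0 < e -> exists y, V y /\ norm y = 1 /\ norm (vsub (T y) (vscal b y)) < e) ->
  approx_eigenvalue V T b.
Proof.
  intros H C. pose proof (Rabs_pos C). pose proof (Rle_abs C).
  destruct (H (/ (Rabs C + 1))) as [y [Vy [Hy1 Hy2]]]; [apply Rinv_0_lt_compat; lra|].
  exists y. split; [exact Vy|]. rewrite Hy1.
  pose proof (norm_nonneg (vsub (T y) (vscal b y))).
  apply (Rmult_lt_compat_l (Rabs C + 1)) in Hy2; [|lra].
  rewrite Rinv_r in Hy2 by lra. nra.
Qed.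

Lemma cauchy_schwarz_form V (B : Y -> Y -> R) : subspace V ->
  (forall x y z, V x -> V y -> V z -> B (vadd x y) z = B x z + B y z) ->
  (forall a x y, V x -> V y -> B (vscal a x) y = a * B x y) ->
  (forall x y, V x -> V y -> B x y = B y x) ->
  (forall x, V x -> 0 <= B x x) ->
  forall x y, V x -> V y -> B x y * B x y <= B x x * B y y.
Proof.
  intros HV Hadd Hsc Hsym Hpos x y Vx Vy.
  apply quadratic_nonneg_discr; [apply Hpos, Vy|]. intro t.
  assert (Vt : V (vscal t y)) by (apply subspace_scal; auto).
  assert (Vxt : V (vadd x (vscal t y))) by (apply subspace_add; auto).
  pose proof (Hpos _ Vxt) as H.
  enough (E : B (vadd x (vscal t y)) (vadd x (vscal t y)) = B x x + 2 * B x y * t + B y y * t * t)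
    by lra.
  rewrite Hadd by auto. rewrite (Hsym x) by auto. rewrite Hsc by auto.
  rewrite (Hsym y) by auto. rewrite !Hadd by auto. rewrite !Hsc by auto.
  rewrite (Hsym y x) by auto. ring.
Qed.

Lemma le_of_polar_bound (a b q : R) : 0 <= a -> 0 <= b -> 0 <= q ->
  (forall t, 0 < t -> 4 * t * (b * b) <= 2 * q * (a * a + t * t * (b * b))) -> b <= q * a.
Proof.
  intros Ha Hb Hq H. destruct (Req_dec b 0) as [->|Hb0]; [nra|].
  destruct (Req_dec a 0) as [->|Ha0].
  - exfalso. specialize (H (/ (q + 1)) ltac:(apply Rinv_0_lt_compat; lra)).
    replace (2 * q * (0 * 0 + / (q + 1) * / (q + 1) * (b * b)))
      with (4 * / (q + 1) * (b * b) * (q / (2 * (q + 1)))) in H by (field; lra).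
    assert (q / (2 * (q + 1)) < 1).
    { apply (Rmult_lt_reg_r (2 * (q + 1))); [lra|]. field_simplify; lra. }
    assert (0 < 4 * / (q + 1) * (b * b)).
    { pose proof (Rinv_0_lt_compat (q + 1) ltac:(lra)). assert (0 < b * b) by nra. nra. }
    nra.
  - specialize (H (a / b) ltac:(apply Rdiv_lt_0_compat; lra)).
    replace (4 * (a / b) * (b * b)) with (4 * a * b) in H by (field; lra).
    replace (a * a + a / b * (a / b) * (b * b)) with (2 * a * a) in H by (field; lra).
    nra.
Qed.

Lemma symm_norm_le_num_radius V T q : subspace V -> linear_on V T -> symm_on V T -> maps V T ->
  0 <= q -> (forall y, V y -> Rabs (inner (T y) y) <= q * (norm y * norm y)) ->
  forall y, V y -> norm (T y) <= q * norm y.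
Proof.
  intros HV HL Hsy Hm Hq H x Vx.
  (* polarization [4 <T x, y> = <T (x + y), x + y> - <T (x - y), x - y>], then [y = t T x] *)
  assert (Key : forall y, V y ->
      4 * inner (T x) y <= 2 * q * (norm x * norm x + norm y * norm y)).
  { intros y Vy.
    pose proof (H (vadd x y) (subspace_add _ _ _ HV Vx Vy)) as H1.
    pose proof (H (vsub x y) (subspace_sub _ _ _ HV Vx Vy)) as H2.
    rewrite (proj1 HL) in H1 by auto. rewrite (linear_sub V T) in H2 by auto.
    rewrite !norm_sq in H1, H2. rewrite !norm_sq.
    autorewrite with vinner in H1, H2.
    assert (E : inner (T y) x = inner (T x) y) by (rewrite Hsy by auto; apply inner_sym).
    rewrite E, (inner_sym y x) in H1, H2.
    match type of H1 with Rabs ?e <= _ => pose proof (Rle_abs e) end.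
    match type of H2 with Rabs ?e <= _ => pose proof (Rle_abs (- e)) as A2 end.
    rewrite Rabs_Ropp in A2. nra. }
  apply le_of_polar_bound; try apply norm_nonneg; try exact Hq.
  intros t Ht. specialize (Key (vscal t (T x)) (subspace_scal _ _ _ HV (Hm x Vx))).
  rewrite inner_scal_r, norm_scal, Rabs_pos_eq, <- (norm_sq (T x)) in Key by lra. nra.
Qed.

Lemma form_le_num_range_ub V T M : subspace V -> linear_on V T ->
  is_upper_bound (num_range V T) M -> forall y, V y -> inner (T y) y <= M * (norm y * norm y).
Proof.
  intros HV HL Hub y Vy. destruct (Req_dec (norm y) 0) as [E|E].
  - apply norm_eq0 in E. subst y. rewrite inner_0_r, norm_zero. lra.
  - assert (Hy : 0 < norm y) by (pose proof (norm_nonneg y); lra).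
    pose proof (Hub _ (ex_intro _ _ (conj (subspace_scal _ (/ norm y) _ HV Vy)
                         (conj (norm_unit_scal y Hy) eq_refl)))) as H1.
    rewrite (proj2 HL) in H1 by auto. autorewrite with vinner in H1.
    apply (Rmult_le_compat_r (norm y * norm y)) in H1; [|nra].
    replace (/ norm y * (/ norm y * inner (T y) y) * (norm y * norm y)) with (inner (T y) y)
      in H1 by (field; lra).
    exact H1.
Qed.

Section NumRangeSup.
Variables (V : Y -> Prop) (T : Y -> Y) (C M : R).
Hypotheses (HV : subspace V) (HL : linear_on V T) (Hsy : symm_on V T) (Hm : maps V T)
  (HC : 0 <= C) (Hb : bdd_on V T C) (HM : is_lub (num_range V T) M).

Let A y := vsub (vscal M y) (T y).

Lemma num_range_sup_defect : forall y, V y ->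
  norm (A y) * norm (A y) <= inner (A y) y * (Rabs M + C).
Proof.
  intros y Vy.
  assert (VA : forall y, V y -> V (A y)).
  { intros z Vz. apply subspace_sub, Hm; auto. apply subspace_scal; auto. }
  assert (Hle := form_le_num_range_ub V T M HV HL (proj1 HM)).
  assert (Hpos : forall z, V z -> 0 <= inner (A z) z).
  { intros z Vz. unfold A. autorewrite with vinner. rewrite <- norm_sq.
    pose proof (Hle z Vz). lra. }
  (* Cauchy-Schwarz for the nonnegative form (u, v) |-> <A u, v> applied to y and A y *)
  pose proof (cauchy_schwarz_form V (fun a b => inner (A a) b) HV) as HCS.
  specialize (HCS ltac:(intros a b c Va Vb Vc; unfold A; rewrite (proj1 HL) by auto;
                        autorewrite with vinner; ring)
                  ltac:(intros a a0 b Va Vb; unfold A; rewrite (proj2 HL) by auto;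
                        autorewrite with vinner; ring)
                  ltac:(intros a b Va Vb; unfold A; autorewrite with vinner; rewrite Hsy by auto;
                        rewrite (inner_sym a b), (inner_sym a (T b)); ring)
                  Hpos y (A y) Vy (VA y Vy)).
  cbv beta in HCS. rewrite <- (norm_sq (A y)) in HCS.
  assert (HAA : inner (A (A y)) (A y) <= (Rabs M + C) * (norm (A y) * norm (A y))).
  { eapply Rle_trans; [apply inner_le|].
    assert (norm (A (A y)) <= (Rabs M + C) * norm (A y)).
    { unfold A at 1. eapply Rle_trans; [apply norm_sub_le|].
      rewrite norm_scal. pose proof (Hb _ (VA y Vy)). lra. }
    pose proof (norm_nonneg (A y)). nra. }
  pose proof (Hpos y Vy). pose proof (norm_nonneg (A y)).
  destruct (Req_dec (norm (A y)) 0) as [E|E]; [rewrite E; pose proof (Rabs_pos M); nra|].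
  assert (0 < norm (A y) * norm (A y)) by nra.
  apply (Rmult_le_reg_r (norm (A y) * norm (A y))); [lra|]. nra.
Qed.

Lemma num_range_sup_approx : forall e, 0 < e ->
  exists y, V y /\ norm y = 1 /\ norm (vsub (T y) (vscal M y)) < e.
Proof.
  intros e He. pose proof (Rabs_pos M) as HM0.
  set (eta := e * e / (Rabs M + C + 1)).
  assert (Heta : 0 < eta) by (apply Rdiv_lt_0_compat; nra).
  destruct (classic (exists y, V y /\ norm y = 1 /\ M - eta < inner (T y) y))
    as [[y [Vy [Hy1 Hy2]]]|Hno].
  - exists y. split; [exact Vy|]. split; [exact Hy1|].
    rewrite norm_sub_sym. fold (A y).
    pose proof (num_range_sup_defect y Vy) as Hdef.
    assert (HAy : inner (A y) y < eta).
    { unfold A. autorewrite with vinner. rewrite <- norm_sq, Hy1. lra. }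
    assert (norm (A y) * norm (A y) < e * e).
    { eapply Rle_lt_trans; [exact Hdef|].
      apply Rle_lt_trans with (eta * (Rabs M + C)); [apply Rmult_le_compat_r; lra|].
      unfold eta. apply (Rmult_lt_reg_r (Rabs M + C + 1)); [lra|].
      replace (e * e / (Rabs M + C + 1) * (Rabs M + C) * (Rabs M + C + 1))
        with (e * e * (Rabs M + C)) by (field; lra).
      nra. }
    pose proof (norm_nonneg (A y)). nra.
  - exfalso. assert (M <= M - eta); [|lra].
    apply (proj2 HM). intros r [y [Vy [Hy ->]]]. apply Rnot_lt_le. intro H2. apply Hno. eauto.
Qed.

End NumRangeSup.

Lemma num_range_sup_approx_eigenvalue V T C : subspace V -> linear_on V T -> symm_on V T ->
  maps V T -> 0 <= C -> bdd_on V T C -> (exists y0, V y0 /\ 0 < norm y0) ->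
  exists M, is_upper_bound (num_range V T) M /\ approx_eigenvalue V T M.
Proof.
  intros HV HL Hsy Hm HC Hb [y0 [Vy0 Hn0]].
  destruct (completeness (num_range V T)) as [M HM].
  - exists C. intros r [y [Vy [Hy ->]]]. eapply Rle_trans; [apply inner_le|].
    pose proof (Hb y Vy). rewrite Hy in *. lra.
  - exists (inner (T (vscal (/ norm y0) y0)) (vscal (/ norm y0) y0)), (vscal (/ norm y0) y0).
    repeat split; [apply subspace_scal; auto|apply norm_unit_scal; auto].
  - exists M. split; [apply HM|].
    apply approx_eigenvalue_of_unit, (num_range_sup_approx V T C M); auto.
Qed.

Lemma approx_eigenvalue_opp V T b :
  approx_eigenvalue V (fun y => vopp (T y)) b -> approx_eigenvalue V T (- b).
Proof.
  intros H C. destruct (H C) as [x [Vx Hx]]. exists x. split; [exact Vx|].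
  replace (vsub (T x) (vscal (- b) x)) with (vopp (vsub (vopp (T x)) (vscal b x))) by vec_eq.
  rewrite norm_opp. exact Hx.
Qed.

Lemma numerical_radius_approx_eigenvalue V T C : subspace V -> linear_on V T -> symm_on V T ->
  maps V T -> 0 <= C -> bdd_on V T C ->
  exists q, 0 <= q /\ (forall y, V y -> Rabs (inner (T y) y) <= q * (norm y * norm y)) /\
    (q = 0 \/ approx_eigenvalue V T q \/ approx_eigenvalue V T (- q)).
Proof.
  intros HV HL Hsy Hm HC Hb.
  destruct (classic (exists y0, V y0 /\ 0 < norm y0)) as [Hne|Hno].
  2:{ exists 0. split; [lra|]. split; [|left; reflexivity]. intros y Vy.
      assert (norm y = 0) by (pose proof (norm_nonneg y); apply Rle_antisym; [apply Rnot_lt_le|]; eauto).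
      rewrite H. pose proof (cauchy_schwarz (T y) y). rewrite H in H0. lra. }
  set (T' := fun y => vopp (T y)).
  destruct (num_range_sup_approx_eigenvalue V T C HV HL Hsy Hm HC Hb Hne) as [M [HM AM]].
  assert (HL' : linear_on V T').
  { split; intros; unfold T'; [rewrite (proj1 HL) by auto|rewrite (proj2 HL) by auto]; vec_eq. }
  destruct (num_range_sup_approx_eigenvalue V T' C HV HL') as [M' [HM' AM']]; auto.
  - intros x y Vx Vy. unfold T'. autorewrite with vinner. rewrite Hsy; auto.
  - intros x Vx. unfold T'. rewrite vopp_scal. apply subspace_scal; auto.
  - intros x Vx. unfold T'. rewrite norm_opp. apply Hb, Vx.
  - apply approx_eigenvalue_opp in AM'.
    pose proof (form_le_num_range_ub V T M HV HL HM) as Hup.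
    pose proof (form_le_num_range_ub V T' M' HV HL' HM') as Hlow.
    (* [-M' <= M]; the larger of [|M|], [|M'|] is attained as an approximate eigenvalue *)
    exists (Rmax (Rabs M) (Rabs M')). split; [eapply Rle_trans; [apply Rabs_pos|apply Rmax_l]|]. split.
    + intros y Vy. specialize (Hup y Vy). specialize (Hlow y Vy).
      unfold T' in Hlow. rewrite inner_opp_l in Hlow.
      pose proof (Rmax_l (Rabs M) (Rabs M')). pose proof (Rmax_r (Rabs M) (Rabs M')).
      pose proof (Rle_abs M). pose proof (Rle_abs M'). pose proof (Rle_abs (- M)). pose proof (Rle_abs (- M')).
      rewrite !Rabs_Ropp in *. pose proof (norm_nonneg y).
      apply Rabs_le. split; nra.
    + right. unfold Rmax. destruct (Rle_dec (Rabs M) (Rabs M')); unfold Rabs.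
      * destruct (Rcase_abs M'); [left|right]; exact AM'.
      * destruct (Rcase_abs M); [right; rewrite Ropp_involutive|left]; exact AM.
Qed.

End SymmetricOperators.

Section SpectralGapAtZero.
Context {Y : RHilbert}.
Implicit Types (x y u : Y).
Variables (P : Y -> Y) (Cp g : R).
Hypotheses (HL : linear_on (fun _ => True) P) (Hsy : symm_on (fun _ => True) P)
  (HCp : 0 <= Cp) (Hb : bdd_on (fun _ => True) P Cp) (Hg : 0 < g)
  (Hpos : forall y, 0 <= inner (P y) y)
  (* the spectrum of [P >= 0] avoids the interval (0, g) *)
  (Hgap : forall y, g * inner (P y) y <= inner (P y) (P y)).

Let c := Cp + g.

Lemma gap_form_cauchy_schwarz u v : inner (P u) v * inner (P u) v <= inner (P u) u * inner (P v) v.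
Proof.
  apply (cauchy_schwarz_form (fun _ => True) (fun a b => inner (P a) b) subspace_True); auto.
  - intros x y z _ _ _. rewrite (proj1 HL) by auto. autorewrite with vinner. ring.
  - intros s x y _ _. rewrite (proj2 HL) by auto. autorewrite with vinner. ring.
  - intros x y _ _. rewrite Hsy by auto. apply inner_sym.
Qed.

Lemma gap_form_upper u : inner (P u) (P u) <= c * inner (P u) u.
Proof.
  pose proof (gap_form_cauchy_schwarz u (P u)) as H.
  assert (HPP : inner (P (P u)) (P u) <= c * inner (P u) (P u)).
  { eapply Rle_trans; [apply inner_le|]. rewrite <- norm_sq.
    pose proof (Hb (P u) I). pose proof (norm_nonneg (P u)). pose proof (norm_nonneg (P (P u))).
    unfold c. nra. }
  pose proof (Hpos (P u)). pose proof (Hpos u).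
  rewrite <- norm_sq in *. set (n := norm (P u)) in *.
  destruct (Req_dec n 0) as [E|E]; [rewrite E; unfold c; nra|].
  assert (0 < n * n) by (pose proof (norm_nonneg (P u)); nra).
  apply (Rmult_le_reg_r (n * n)); nra.
Qed.

Lemma gap_form_lower y : g * inner (P y) (P y) <= inner (P (P y)) (P y).
Proof.
  pose proof (gap_form_cauchy_schwarz y (P y)) as H.
  pose proof (Hgap y). pose proof (Hpos y). pose proof (Hpos (P y)).
  rewrite <- norm_sq in *. set (n := norm (P y)) in *.
  destruct (Req_dec n 0) as [E|E]; [rewrite E; nra|].
  assert (0 < n * n) by (pose proof (norm_nonneg (P y)); nra).
  apply (Rmult_le_reg_r (n * n)); [lra|].
  apply Rle_trans with (g * (inner (P y) y * inner (P (P y)) (P y))); nra.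
Qed.

Let theta := 1 - g / c.

Lemma gap_theta_bounds : 0 <= theta < 1.
Proof.
  unfold theta, c. assert (0 < g / (Cp + g)) by (apply Rdiv_lt_0_compat; lra).
  split; [|lra]. apply (Rmult_le_reg_r (Cp + g)); [lra|]. unfold Rdiv. field_simplify; lra.
Qed.

Let step u := vsub u (vscal (/ c) (P u)).

(* One step of [u |-> u - P u / c] damps [P u] by [sqrt theta]: on the range of [P]
   the form lies between [g] and [c]. *)
Lemma gap_step_contracts u : inner (P (step u)) (P (step u)) <= theta * inner (P u) (P u).
Proof.
  assert (Hc : 0 < c) by (unfold c; lra).
  unfold step. rewrite (linear_sub _ P _ _ subspace_True HL I I), (proj2 HL) by exact I.
  pose proof (gap_form_lower u) as B0. pose proof (gap_form_upper (P u)) as A0.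
  set (v := P u) in *. autorewrite with vinner. rewrite (inner_sym v (P v)).
  assert (A2 : / c * / c * inner (P v) (P v) <= / c * inner (P v) v).
  { replace (/ c * inner (P v) v) with (/ c * / c * (c * inner (P v) v)) by (field; lra).
    apply Rmult_le_compat_l; [|exact A0].
    apply Rlt_le, Rmult_lt_0_compat; apply Rinv_0_lt_compat; lra. }
  assert (B2 : g * / c * inner v v <= / c * inner (P v) v).
  { replace (g * / c * inner v v) with (/ c * (g * inner v v)) by ring.
    apply Rmult_le_compat_l; [apply Rlt_le, Rinv_0_lt_compat; lra|exact B0]. }
  unfold theta, Rdiv. nra.
Qed.

Let rho := sqrt theta.

Lemma gap_rho_bounds : 0 <= rho < 1 /\ rho * rho = theta.
Proof.
  pose proof gap_theta_bounds.
  split; [split; [apply sqrt_pos|rewrite <- sqrt_1; apply sqrt_lt_1; lra]|apply sqrt_sqrt; lra].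
Qed.

Lemma gap_iterate_decay y0 j : norm (P (Nat.iter j step y0)) <= rho ^ j * norm (P y0).
Proof.
  destruct gap_rho_bounds as [Hrho Hrho2]. pose proof (norm_nonneg (P y0)).
  induction j as [|j IH]; [simpl; lra|].
  set (s := Nat.iter j step y0) in *. change (Nat.iter (S j) step y0) with (step s).
  pose proof (gap_step_contracts s) as H1. rewrite <- !norm_sq, <- Hrho2 in H1.
  pose proof (norm_nonneg (P (step s))). pose proof (norm_nonneg (P s)).
  pose proof (pow_le rho j ltac:(lra)).
  apply Rsqr_incr_0_var; [unfold Rsqr|apply Rmult_le_pos; [apply pow_le|]; lra].
  simpl. apply Rle_trans with (rho * rho * (norm (P s) * norm (P s))); [exact H1|].
  assert (norm (P s) * norm (P s) <= (rho ^ j * norm (P y0)) * (rho ^ j * norm (P y0)))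
    by (apply Rmult_le_compat; lra).
  nra.
Qed.

Lemma kernel_approx : exists K, 0 <= K /\
  forall y0, exists l, P l = vzero /\ norm (vsub l y0) <= K * norm (P y0).
Proof.
  assert (Hc : 0 < c) by (unfold c; lra).
  destruct gap_rho_bounds as [Hrho _].
  exists (/ (c * (1 - rho))). split; [apply Rlt_le, Rinv_0_lt_compat, Rmult_lt_0_compat; lra|].
  intro y0. set (s := fun j => Nat.iter j step y0).
  assert (Hstep : forall j, norm (vsub (s (S j)) (s j)) <= (norm (P y0) / c) * rho ^ j).
  { intro j. change (s (S j)) with (step (s j)). unfold step.
    replace (vsub (vsub (s j) (vscal (/ c) (P (s j)))) (s j)) with (vscal (- / c) (P (s j))) by vec_eq.
    rewrite norm_scal, Rabs_Ropp, Rabs_pos_eq by (apply Rlt_le, Rinv_0_lt_compat; lra).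
    replace (norm (P y0) / c * rho ^ j) with (/ c * (rho ^ j * norm (P y0))) by (field; lra).
    apply Rmult_le_compat_l; [apply Rlt_le, Rinv_0_lt_compat; lra|apply gap_iterate_decay]. }
  destruct (geometric_limit s _ rho Hrho Hstep) as [l Hl].
  exists l. split.
  - apply norm_eq0, (geometric_bound_eq0 _ ((Cp / (c * (1 - rho)) + 1) * norm (P y0)) rho);
      [apply norm_nonneg|exact Hrho|]. intro j.
    replace (P l) with (vadd (P (vsub l (s j))) (P (s j)))
      by (rewrite <- (proj1 HL) by auto; f_equal; vec_eq).
    eapply Rle_trans; [apply norm_triangle|].
    pose proof (Hb (vsub l (s j)) I). pose proof (Hl j). pose proof (gap_iterate_decay y0 j).
    replace ((Cp / (c * (1 - rho)) + 1) * norm (P y0) * rho ^ j)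
      with (Cp * (norm (P y0) / c * rho ^ j / (1 - rho)) + rho ^ j * norm (P y0)) by (field; lra).
    apply Rplus_le_compat; [|exact H1]. eapply Rle_trans; [exact H|].
    apply Rmult_le_compat_l; [exact HCp|exact H0].
  - pose proof (Hl 0%nat) as H0. change (s 0%nat) with y0 in H0.
    replace (norm (P y0) / c * rho ^ 0 / (1 - rho)) with (/ (c * (1 - rho)) * norm (P y0)) in H0
      by (simpl; field; lra).
    exact H0.
Qed.

End SpectralGapAtZero.

Section BoundedBelowSurjective.
Context {Y : RHilbert}.
Implicit Types (x y u v h : Y).
Variables (V : Y -> Prop) (Bop : Y -> Y) (b K : R).
Hypotheses (HV : subspace V) (HVc : seq_closed V) (HL : linear_on V Bop) (Hsy : symm_on V Bop)
  (Hm : maps V Bop) (Hb : 0 < b) (HbK : b <= K)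
  (Hlow : forall v, V v -> b * norm v <= norm (Bop v))
  (Hup : forall v, V v -> norm (Bop v) <= K * norm v).

Let Sop h := vsub h (vscal (/ (K * K)) (Bop (Bop h))).
Let q := 1 - b * b / (K * K).

Lemma bounded_below_shift_contracts : forall h, V h -> norm (Sop h) <= q * norm h.
Proof.
  assert (Hq : 0 <= q).
  { unfold q. enough (b * b / (K * K) <= 1) by lra.
    apply (Rmult_le_reg_r (K * K)); [nra|]. unfold Rdiv. rewrite Rmult_assoc, Rinv_l by nra. nra. }
  apply symm_norm_le_num_radius; auto.
  - split.
    + intros x y Vx Vy. unfold Sop. rewrite !(proj1 HL) by auto. vec_eq.
    + intros a x Vx. unfold Sop. rewrite !(proj2 HL) by auto. vec_eq.
  - intros u v Vu Vv. unfold Sop. autorewrite with vinner.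
    rewrite (Hsy (Bop u) v), (Hsy u (Bop v)) by auto. ring.
  - intros u Vu. unfold Sop. apply subspace_sub, subspace_scal; auto.
  - intros h Vh. unfold Sop. autorewrite with vinner. rewrite (Hsy (Bop h) h), <- !norm_sq by auto.
    pose proof (Hlow h Vh). pose proof (Hup h Vh). pose proof (norm_nonneg h).
    pose proof (norm_nonneg (Bop h)).
    assert (b * norm h * (b * norm h) <= norm (Bop h) * norm (Bop h)) by (apply Rmult_le_compat; nra).
    assert (norm (Bop h) * norm (Bop h) <= K * norm h * (K * norm h)) by (apply Rmult_le_compat; nra).
    assert (0 < / (K * K)) by (apply Rinv_0_lt_compat; nra).
    assert (/ (K * K) * (b * norm h * (b * norm h)) <= / (K * K) * (norm (Bop h) * norm (Bop h)))
      by (apply Rmult_le_compat_l; lra).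
    assert (/ (K * K) * (norm (Bop h) * norm (Bop h)) <= norm h * norm h).
    { replace (norm h * norm h) with (/ (K * K) * (K * norm h * (K * norm h))) by (field; nra).
      apply Rmult_le_compat_l; lra. }
    rewrite Rabs_pos_eq by lra. unfold q, Rdiv. lra.
Qed.

Lemma bounded_below_symm_surj : forall y, V y -> exists v, V v /\ Bop v = y.
Proof.
  intros y Vy.
  assert (Hq : 0 <= q < 1).
  { unfold q. assert (0 < b * b / (K * K)) by (apply Rdiv_lt_0_compat; nra).
    assert (b * b / (K * K) <= 1).
    { apply (Rmult_le_reg_r (K * K)); [nra|]. unfold Rdiv. rewrite Rmult_assoc, Rinv_l by nra. nra. }
    lra. }
  (* [u = Sop u + y / K^2] is [Bop (Bop u) = y] *)
  destruct (contraction_fixpoint V (fun u => vadd (Sop u) (vscal (/ (K * K)) y)) q HV HVc Hq)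
    as [u [Vu Hfix]].
  - intros a Va. unfold Sop. apply subspace_add, subspace_scal; auto.
    apply subspace_sub, subspace_scal; auto.
  - intros a a' Va Va'.
    replace (vsub (vadd (Sop a) (vscal (/ (K * K)) y)) (vadd (Sop a') (vscal (/ (K * K)) y)))
      with (Sop (vsub a a')).
    + apply bounded_below_shift_contracts, subspace_sub; auto.
    + pose proof (Hm a Va). pose proof (Hm a' Va'). unfold Sop.
      rewrite (linear_sub V Bop a a'), (linear_sub V Bop (Bop a) (Bop a')) by auto. vec_eq.
  - exists (Bop u). split; [apply Hm, Vu|].
    replace (Bop (Bop u)) with (vadd (vscal (K * K) (vsub u (vadd (Sop u) (vscal (/ (K * K)) y)))) y).
    + rewrite Hfix. vec_eq.
    + unfold Sop. vec_eqf. nra.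
Qed.

End BoundedBelowSurjective.

(** * Resolvents *)

Section Resolvent.
Context {Y : RHilbert}.
Implicit Types (x y : Y) (V : Y -> Prop) (T : Y -> Y).
Variables (D : Y -> Prop) (L : Y -> Y).

Definition shifted (nu : R) (x : Y) : Y := vsub (L x) (vscal nu x).

Lemma approx_eigenvalue_inverse V T (D' : Y -> Prop) nu b : b <> 0 ->
  (forall y, V y -> D' (T y) /\ shifted nu (T y) = y) ->
  approx_eigenvalue V T b -> approx_eigenvalue D' L (nu + / b).
Proof.
  intros Hb HT Hn C.
  assert (Hab : 0 < Rabs b) by (apply Rabs_pos_lt; exact Hb).
  destruct (Hn ((Rabs C / Rabs b + 1) / Rabs b)) as [y [Vy Hy]].
  destruct (HT y Vy) as [HD HL]. exists (T y). split; [exact HD|].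
  replace (vsub (L (T y)) (vscal (nu + / b) (T y)))
    with (vscal (- / b) (vsub (T y) (vscal b y))).
  2:{ replace (vsub (L (T y)) (vscal (nu + / b) (T y))) with (vsub (shifted nu (T y)) (vscal (/ b) (T y)))
        by (unfold shifted; vec_eq).
      rewrite HL. vec_eqf. exact Hb. }
  rewrite norm_scal, Rabs_Ropp, Rabs_inv.
  set (e := norm (vsub (T y) (vscal b y))) in *.
  pose proof (norm_nonneg (vsub (T y) (vscal b y))) as He. fold e in He.
  assert (Hx : Rabs b * norm y - e <= norm (T y)).
  { pose proof (norm_sub_rev (T y) (vscal b y)) as H. rewrite norm_scal in H. fold e in H.
    pose proof (Rle_abs (- (norm (T y) - Rabs b * norm y))) as H2. rewrite Rabs_Ropp in H2. lra. }
  apply (Rmult_lt_compat_l (Rabs b)) in Hy; [|exact Hab].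
  replace (Rabs b * ((Rabs C / Rabs b + 1) / Rabs b * e)) with ((Rabs C / Rabs b + 1) * e)
    in Hy by (field; lra).
  apply Rle_lt_trans with (Rabs C / Rabs b * e).
  - pose proof (Rle_abs C). replace (Rabs C / Rabs b * e) with (Rabs C * (/ Rabs b * e)) by (field; lra).
    apply Rmult_le_compat_r; [apply Rmult_le_pos; [apply Rlt_le, Rinv_0_lt_compat|]|]; lra.
  - lra.
Qed.

Lemma resolvent_not_approx_eigenvalue mu : in_resolvent D L mu -> ~ approx_eigenvalue D L mu.
Proof.
  intros [Rm [_ [H2 [C HC]]]] Hn. destruct (Hn C) as [x [Dx Hx]].
  specialize (HC (vsub (L x) (vscal mu x))). rewrite H2 in HC by exact Dx. lra.
Qed.

Hypothesis SA : self_adjoint D L.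

Lemma SA_sub : subspace D. Proof. apply SA. Qed.
Lemma SA_lin : linear_on D L. Proof. apply SA. Qed.
Lemma SA_sym : forall x y, D x -> D y -> inner (L x) y = inner x (L y). Proof. apply SA. Qed.

Lemma shifted_linear nu : linear_on D (shifted nu).
Proof.
  split; intros; unfold shifted; [rewrite (proj1 SA_lin)|rewrite (proj2 SA_lin)]; auto; vec_eq.
Qed.

Lemma shifted_symm nu x y : D x -> D y -> inner (shifted nu x) y = inner x (shifted nu y).
Proof.
  intros Dx Dy. unfold shifted. autorewrite with vinner.
  rewrite SA_sym, (inner_sym x y) by auto. ring.
Qed.

Definition resolvent_op (mu : R) (Rm : Y -> Y) (C : R) : Prop :=
  (forall y, D (Rm y) /\ shifted mu (Rm y) = y) /\ (forall x, D x -> Rm (shifted mu x) = x) /\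
  0 <= C /\ bdd_on (fun _ => True) Rm C.

Lemma resolvent_op_of mu : in_resolvent D L mu -> exists Rm C, resolvent_op mu Rm C.
Proof.
  intros [Rm [H1 [H2 [C HC]]]]. exists Rm, (Rmax C 0).
  split; [exact H1|]. split; [exact H2|]. split; [apply Rmax_r|]. intros y _. eapply Rle_trans; [apply HC|].
  apply Rmult_le_compat_r; [apply norm_nonneg|apply Rmax_l].
Qed.

Lemma resolvent_op_linear mu Rm C : resolvent_op mu Rm C -> linear_on (fun _ => True) Rm.
Proof.
  intros [H1 [H2 _]]. pose proof (shifted_linear mu) as [Ha Hs]. split.
  - intros a b _ _. rewrite <- (H2 (vadd (Rm a) (Rm b))), Ha, (proj2 (H1 a)), (proj2 (H1 b));
      [reflexivity|apply H1|apply H1|apply subspace_add; [apply SA_sub|apply H1|apply H1]].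
  - intros a x _. rewrite <- (H2 (vscal a (Rm x))), Hs, (proj2 (H1 x));
      [reflexivity|apply H1|apply subspace_scal; [apply SA_sub|apply H1]].
Qed.

Lemma resolvent_op_symm mu Rm C : resolvent_op mu Rm C -> symm_on (fun _ => True) Rm.
Proof.
  intros [H1 _] a b _ _.
  rewrite <- (proj2 (H1 b)) at 1. rewrite <- (proj2 (H1 a)) at 2.
  rewrite <- shifted_symm by apply H1. reflexivity.
Qed.

Lemma resolvent_lower_bound nu r : in_resolvent D L nu -> 0 < r ->
  (forall mu, 0 < Rabs (mu - nu) < r -> in_resolvent D L mu) ->
  forall x, D x -> r * norm x <= norm (shifted nu x).
Proof.
  intros Hres Hr Hnb x Dx.
  destruct (resolvent_op_of nu Hres) as [Rm [C HR]].
  pose proof HR as [H1 [H2 [HC Hb]]].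
  pose proof (resolvent_op_linear _ _ _ HR) as HRl. pose proof (resolvent_op_symm _ _ _ HR) as HRs.
  destruct (numerical_radius_approx_eigenvalue (fun _ => True) Rm C subspace_True HRl HRs
              (fun _ _ => I) HC Hb) as [q [Hq [Hform Hcase]]].
  assert (Hqr : q * r <= 1).
  { apply Rnot_lt_le. intro Hlt.
    assert (Hq0 : 0 < q) by nra.
    assert (Hinv : 0 < / q < r).
    { split; [apply Rinv_0_lt_compat; lra|].
      apply (Rmult_lt_reg_l q); [lra|]. rewrite Rinv_r; lra. }
    destruct Hcase as [->|[Hn|Hn]]; [lra| |].
    - apply (resolvent_not_approx_eigenvalue (nu + / q)).
      + apply Hnb. replace (nu + / q - nu) with (/ q) by ring. rewrite Rabs_pos_eq; lra.
      + apply (approx_eigenvalue_inverse (fun _ => True) Rm D nu q); auto; lra.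
    - apply (resolvent_not_approx_eigenvalue (nu + / - q)).
      + apply Hnb. replace (nu + / - q - nu) with (- / q) by (field; lra).
        rewrite Rabs_Ropp, Rabs_pos_eq; lra.
      + apply (approx_eigenvalue_inverse (fun _ => True) Rm D nu (- q)); auto; lra. }
  pose proof (symm_norm_le_num_radius (fun _ => True) Rm q subspace_True HRl HRs (fun _ _ => I) Hq
     (fun y _ => Hform y I) (shifted nu x) I) as HP.
  rewrite H2 in HP by exact Dx.
  pose proof (norm_nonneg (shifted nu x)). nra.
Qed.

End Resolvent.

(** * The isolated eigenvalue and the fibers *)

Section Projection.
Context {Y : RHilbert}.
Implicit Types (x y a b : Y).
Variable phi : Y.
Hypothesis Hphi : inner phi phi = 1.

Lemma norm_phi : norm phi = 1.
Proof. unfold norm. rewrite Hphi. apply sqrt_1. Qed.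
Lemma Pr_HY y : HY phi (Pr phi y).
Proof. unfold HY, Pr. autorewrite with vinner. rewrite Hphi. ring. Qed.
Lemma Pr_id y : HY phi y -> Pr phi y = y.
Proof. intro H. unfold Pr. unfold HY in H. rewrite H. vec_eq. Qed.
Lemma Pr_sub a b : Pr phi (vsub a b) = vsub (Pr phi a) (Pr phi b).
Proof. unfold Pr. rewrite inner_sub_l. vec_eq. Qed.
Lemma Pr_add a b : Pr phi (vadd a b) = vadd (Pr phi a) (Pr phi b).
Proof. unfold Pr. rewrite inner_add_l. vec_eq. Qed.
Lemma Pr_phi s : Pr phi (vscal s phi) = vzero.
Proof. unfold Pr. rewrite inner_scal_l, Hphi. vec_eq. Qed.
Lemma Pr_decomp y : y = vadd (Pr phi y) (vscal (inner y phi) phi).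
Proof. unfold Pr. vec_eq. Qed.
Lemma Pr_norm y : norm (Pr phi y) <= norm y.
Proof.
  apply Rsqr_incr_0_var; [|apply norm_nonneg]. unfold Rsqr. rewrite !norm_sq. unfold Pr.
  autorewrite with vinner. rewrite Hphi, (inner_sym phi y).
  pose proof (Rle_0_sqr (inner y phi)). unfold Rsqr in *. nra.
Qed.
Lemma inner_phi_le y : Rabs (inner y phi) <= norm y.
Proof. eapply Rle_trans; [apply cauchy_schwarz|]. rewrite norm_phi. lra. Qed.

Lemma distY_sym a b : distY a b = distY b a.
Proof. apply norm_sub_sym. Qed.
Lemma Pr_distY_le a b : distY (Pr phi a) (Pr phi b) <= distY a b.
Proof. unfold distY. rewrite <- Pr_sub. apply Pr_norm. Qed.

End Projection.

Lemma sqrt_sum_sq_le (x y : R) : 0 <= x -> 0 <= y -> sqrt (x ^ 2 + y ^ 2) <= x + y.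
Proof. intros Hx Hy. rewrite <- (sqrt_square (x + y)) by lra. apply sqrt_le_1_alt. nra. Qed.

Lemma minkowski2 (x y p1 q1 p2 q2 : R) : 0 <= p1 -> 0 <= q1 -> 0 <= p2 -> 0 <= q2 ->
  0 <= x <= p1 + p2 -> 0 <= y <= q1 + q2 ->
  sqrt (x ^ 2 + y ^ 2) <= sqrt (p1 ^ 2 + q1 ^ 2) + sqrt (p2 ^ 2 + q2 ^ 2).
Proof.
  intros. pose proof (sqrt_pos (p1 ^ 2 + q1 ^ 2)). pose proof (sqrt_pos (p2 ^ 2 + q2 ^ 2)).
  pose proof (sqrt_sqrt (p1 ^ 2 + q1 ^ 2) ltac:(nra)) as HA.
  pose proof (sqrt_sqrt (p2 ^ 2 + q2 ^ 2) ltac:(nra)) as HB.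
  set (A := sqrt (p1 ^ 2 + q1 ^ 2)) in *. set (B := sqrt (p2 ^ 2 + q2 ^ 2)) in *.
  rewrite <- (sqrt_square (A + B)) by lra. apply sqrt_le_1_alt.
  assert (HAB : p1 * p2 + q1 * q2 <= A * B).
  { apply Rsqr_incr_0_var; [unfold Rsqr|nra].
    replace (A * B * (A * B)) with ((A * A) * (B * B)) by ring. rewrite HA, HB.
    pose proof (pow2_ge_0 (p1 * q2 - q1 * p2)). nra. }
  nra.
Qed.

Section GraphDistance.
Context {Y : RHilbert}.
Implicit Types (a b : Y).

Lemma distY_pmetric : pmetric (@distY Y).
Proof.
  unfold distY. repeat split.
  - intro a. replace (vsub a a) with (@vzero Y) by vec_eq. apply norm_zero.
  - intros; apply norm_sub_sym.
  - intros; apply norm_sub_tri.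
Qed.

Lemma graph_dist_pmetric (L : Y -> Y) : pmetric (graph_dist L).
Proof.
  unfold graph_dist. repeat split.
  - intro a. replace (vsub a a) with (@vzero Y) by vec_eq.
    replace (vsub (L a) (L a)) with (@vzero Y) by vec_eq. rewrite norm_zero.
    replace (0 ^ 2 + 0 ^ 2) with 0 by ring. apply sqrt_0.
  - intros. rewrite (norm_sub_sym a b), (norm_sub_sym (L a) (L b)). reflexivity.
  - intros a b c. apply minkowski2; try apply norm_nonneg; split; try apply norm_nonneg;
      apply norm_sub_tri.
Qed.

Lemma graph_dist_le (L : Y -> Y) a b :
  graph_dist L a b <= norm (vsub a b) + norm (vsub (L a) (L b)).
Proof. apply sqrt_sum_sq_le; apply norm_nonneg. Qed.

End GraphDistance.

Section Eigenvalue.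
Context {Y : RHilbert}.
Implicit Types (x y : Y).
Variables (D : Y -> Prop) (L : Y -> Y) (lam : R) (phi : Y).
Hypotheses (SA : self_adjoint D L) (EIG : simple_isolated_eigenvalue D L lam phi).

Lemma Dphi : D phi. Proof. apply EIG. Qed.
Lemma phi_unit : inner phi phi = 1.
Proof. destruct EIG as [_ [H _]]. rewrite <- norm_sq, H. ring. Qed.
Lemma Lphi : L phi = vscal lam phi. Proof. apply EIG. Qed.

Let Hphi := phi_unit.
Let HDphi := Dphi.

Lemma eigenvalue_isolated : exists delta, 0 < delta /\
  forall mu, 0 < Rabs (mu - lam) < delta -> in_resolvent D L mu.
Proof.
  destruct EIG as [_ [_ [_ [_ [d [Hd H]]]]]]. exists d. split; [exact Hd|].
  intros mu Hmu. apply NNPP, H, Hmu.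
Qed.

Lemma shifted_phi nu : shifted L nu phi = vscal (lam - nu) phi.
Proof. unfold shifted. rewrite Lphi. vec_eq. Qed.

Lemma shifted_HY nu x : HX D phi x -> HY phi (shifted L nu x).
Proof.
  intros [Dx Hx]. unfold HY in *. rewrite (shifted_symm D L SA) by (auto; apply Dphi).
  rewrite shifted_phi, inner_scal_r, Hx. ring.
Qed.

Lemma L_HY x : HX D phi x -> HY phi (L x).
Proof.
  intro H. pose proof (shifted_HY 0 x H) as H2. unfold shifted, HY in *.
  rewrite inner_sub_l, inner_scal_l, (proj2 H) in H2. lra.
Qed.

Lemma resolvent_HY mu Rm C : resolvent_op D L mu Rm C -> mu <> lam ->
  forall y, HY phi y -> HY phi (Rm y).
Proof.
  intros [H1 _] Hmu y Hy. unfold HY in *.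
  assert (E : inner (Rm y) (shifted L mu phi) = inner y phi).
  { rewrite <- (shifted_symm D L SA) by (first [apply H1|apply Dphi]). rewrite (proj2 (H1 y)). reflexivity. }
  rewrite shifted_phi, inner_scal_r, Hy in E.
  apply (Rmult_eq_reg_l (lam - mu)); lra.
Qed.

(* Both [lam + d/2] and [lam - d/2] are at distance [d/2] from the spectrum. *)
Lemma isolated_form_bound : exists delta, 0 < delta /\ forall x, D x ->
  delta * Rabs (inner (shifted L lam x) x) <= inner (shifted L lam x) (shifted L lam x).
Proof.
  destruct eigenvalue_isolated as [d [Hd Hres]]. exists d. split; [exact Hd|]. intros x Dx.
  assert (Hr : forall s, Rabs s = d / 2 ->
      d / 2 * norm x <= norm (vsub (shifted L lam x) (vscal s x))).
  { intros s Hs. replace (vsub (shifted L lam x) (vscal s x)) with (shifted L (lam + s) x)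
      by (unfold shifted; vec_eq).
    apply (resolvent_lower_bound D L SA); [apply Hres; replace (lam + s - lam) with s by ring; lra|lra| |exact Dx].
    intros mu Hmu. apply Hres.
    pose proof (Rabs_triang (lam + s - mu) (mu - lam)) as T1.
    pose proof (Rabs_triang (mu - (lam + s)) s) as T2.
    replace (lam + s - mu + (mu - lam)) with s in T1 by ring.
    replace (mu - (lam + s) + s) with (mu - lam) in T2 by ring.
    rewrite Rabs_minus_sym in T1. lra. }
  pose proof (Hr (d / 2) ltac:(rewrite Rabs_pos_eq; lra)) as A.
  pose proof (Hr (- (d / 2)) ltac:(rewrite Rabs_Ropp, Rabs_pos_eq; lra)) as B.
  pose proof (norm_nonneg x).
  apply Rsqr_incr_1 in A; [|nra|apply norm_nonneg]. apply Rsqr_incr_1 in B; [|nra|apply norm_nonneg].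
  unfold Rsqr in A, B. rewrite !norm_sq in A, B. autorewrite with vinner in A, B.
  set (a := shifted L lam x) in *. rewrite (inner_sym x a), <- (norm_sq x) in A, B.
  unfold Rabs. destruct (Rcase_abs (inner a x)); nra.
Qed.

Section ReducedOperator.
Variables (eps C : R) (Rm : Y -> Y).
Hypotheses (Heps : 0 < eps) (HR : resolvent_op D L (lam + eps) Rm C)
  (Hform : forall x, D x ->
     2 * eps * Rabs (inner (shifted L lam x) x) <= inner (shifted L lam x) (shifted L lam x)).

(* [P = (L - lam) (L - lam - eps)^-1 / eps]; its kernel consists of eigenvectors, and
   [Hform] puts a spectral gap between [0] and the rest of its spectrum. *)
Let P y := vadd (Rm y) (vscal (/ eps) y).

Lemma reduced_decomp y : y = vsub (shifted L lam (Rm y)) (vscal eps (Rm y)).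
Proof. rewrite <- (proj2 (proj1 HR y)) at 1. unfold shifted. vec_eq. Qed.

Lemma reduced_eq y : P y = vscal (/ eps) (shifted L lam (Rm y)).
Proof. unfold P. rewrite (reduced_decomp y) at 2. vec_eqf. lra. Qed.

Lemma reduced_form_eq y : inner (P y) y =
  / eps * (inner (shifted L lam (Rm y)) (shifted L lam (Rm y)) - eps * inner (shifted L lam (Rm y)) (Rm y)).
Proof. rewrite reduced_eq. rewrite (reduced_decomp y) at 2. autorewrite with vinner. ring. Qed.

Lemma reduced_form_nonneg y : 0 <= inner (P y) y.
Proof.
  rewrite reduced_form_eq. pose proof (Hform (Rm y) (proj1 (proj1 HR y))).
  set (a := shifted L lam (Rm y)) in *. pose proof (Rle_abs (inner a (Rm y))).
  pose proof (Rabs_pos (inner a (Rm y))).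
  apply Rmult_le_pos; [apply Rlt_le, Rinv_0_lt_compat; lra|nra].
Qed.

Lemma reduced_form_gap y : 2 / (3 * eps) * inner (P y) y <= inner (P y) (P y).
Proof.
  rewrite reduced_form_eq, reduced_eq. autorewrite with vinner.
  pose proof (Hform (Rm y) (proj1 (proj1 HR y))).
  set (a := shifted L lam (Rm y)) in *.
  pose proof (Rle_abs (- inner a (Rm y))). rewrite Rabs_Ropp in *.
  pose proof (Rabs_pos (inner a (Rm y))).
  replace (2 / (3 * eps) * (/ eps * (inner a a - eps * inner a (Rm y))))
    with (/ eps * / eps * (2 / 3 * inner a a - 2 / 3 * (eps * inner a (Rm y)))) by (field; lra).
  replace (/ eps * (/ eps * inner a a)) with (/ eps * / eps * inner a a) by ring.
  apply Rmult_le_compat_l; [apply Rlt_le, Rmult_lt_0_compat; apply Rinv_0_lt_compat; lra|]. nra.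
Qed.

Lemma reduced_linear : linear_on (fun _ => True) P.
Proof.
  destruct (resolvent_op_linear D L SA _ _ _ HR) as [Ha Hs]. unfold P.
  split; intros; [rewrite Ha|rewrite Hs]; auto; vec_eq.
Qed.

Lemma reduced_symm : symm_on (fun _ => True) P.
Proof.
  intros a b _ _. unfold P. autorewrite with vinner.
  rewrite (resolvent_op_symm D L SA _ _ _ HR) by auto. rewrite (inner_sym a b). ring.
Qed.

Lemma reduced_bdd : bdd_on (fun _ => True) P (C + / eps).
Proof.
  intros a _. unfold P. eapply Rle_trans; [apply norm_triangle|].
  rewrite norm_scal, Rabs_pos_eq by (apply Rlt_le, Rinv_0_lt_compat; lra).
  pose proof (proj2 (proj2 (proj2 HR)) a I). lra.
Qed.

Lemma reduced_kernel_Pr l : P l = vzero -> Pr phi l = vzero.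
Proof.
  intro Hl. pose proof (proj1 HR l) as [Dw Hw]. set (w := Rm l) in *.
  assert (Ha : shifted L lam w = vzero).
  { assert (E := reduced_eq l). fold w in E. rewrite Hl in E.
    apply (f_equal (vscal eps)) in E. rewrite vscal_assoc, Rinv_r, vscal_1 in E by lra.
    rewrite <- E. vec_eq. }
  assert (Lw : L w = vscal lam w).
  { apply veq_of_inner. replace (vsub (L w) (vscal lam w)) with (shifted L lam w) by reflexivity.
    rewrite Ha. apply inner_0_l. }
  destruct EIG as [_ [_ [_ [Hsimp _]]]]. destruct (Hsimp w Dw Lw) as [k Hk].
  replace l with (vscal (- eps * k) phi).
  - apply (Pr_phi phi Hphi).
  - rewrite <- Hw. unfold shifted. rewrite Lw, Hk. vec_eq.
Qed.

Lemma reduced_no_approx_eigenvalue : ~ approx_eigenvalue (HX D phi) L lam.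
Proof.
  intro Hn. pose proof (Rinv_0_lt_compat eps Heps) as Hie.
  destruct (kernel_approx P (C + / eps) (2 / (3 * eps)) reduced_linear reduced_symm
              ltac:(pose proof (proj1 (proj2 (proj2 HR))); lra) reduced_bdd
              ltac:(apply Rdiv_lt_0_compat; lra) reduced_form_nonneg reduced_form_gap) as [K [HK Hker]].
  destruct (Hn ((1 + K / eps) / eps)) as [x [HXx Hx]].
  change (vsub (L x) (vscal lam x)) with (shifted L lam x) in Hx. set (a := shifted L lam x) in *.
  set (y0 := shifted L (lam + eps) x).
  assert (Ry0 : Rm y0 = x) by apply (proj1 (proj2 HR)), HXx.
  assert (Py0 : P y0 = vscal (/ eps) a) by (rewrite reduced_eq, Ry0; reflexivity).
  destruct (Hker y0) as [l [Pl Hl]].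
  rewrite Py0, norm_scal, Rabs_pos_eq in Hl by lra.
  (* the kernel of [P] is spanned by [phi], so it stays at distance [|y0|] from [y0 : H_Y] *)
  assert (Hy0 : norm y0 <= norm (vsub l y0)).
  { rewrite norm_sub_sym.
    rewrite <- (Pr_id phi y0 (shifted_HY _ x HXx)) at 1.
    replace (Pr phi y0) with (Pr phi (vsub y0 l))
      by (rewrite (Pr_sub phi), (reduced_kernel_Pr l Pl); vec_eq).
    apply (Pr_norm phi Hphi). }
  assert (Hlow : eps * norm x - norm a <= norm y0).
  { replace y0 with (vsub a (vscal eps x)) by (unfold y0, a, shifted; vec_eq).
    pose proof (norm_sub_rev (vscal eps x) a) as H. rewrite norm_scal, (Rabs_pos_eq eps) in H by lra.
    rewrite norm_sub_sym in H. pose proof (Rle_abs (eps * norm x - norm a)). lra. }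
  apply (Rmult_lt_compat_l eps) in Hx; [|lra].
  replace (eps * ((1 + K / eps) / eps * norm a)) with (norm a + K * (/ eps * norm a)) in Hx
    by (field; lra).
  lra.
Qed.

End ReducedOperator.

Lemma eigenvalue_not_approx_on_HX : ~ approx_eigenvalue (HX D phi) L lam.
Proof.
  destruct eigenvalue_isolated as [d1 [Hd1 Hres]].
  destruct isolated_form_bound as [d [Hd Hgap]].
  set (eps := Rmin d d1 / 2).
  assert (Heps : 0 < eps) by (unfold eps; pose proof (Rmin_pos d d1 Hd Hd1); lra).
  pose proof (Rmin_l d d1). pose proof (Rmin_r d d1).
  destruct (resolvent_op_of D L (lam + eps)) as [Rm [C HR]].
  { apply Hres. replace (lam + eps - lam) with eps by ring. rewrite Rabs_pos_eq; unfold eps in *; lra. }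
  apply (reduced_no_approx_eigenvalue eps C Rm Heps HR).
  intros x Dx. pose proof (Hgap x Dx). pose proof (Rabs_pos (inner (shifted L lam x) x)).
  apply Rle_trans with (d * Rabs (inner (shifted L lam x) x)); [apply Rmult_le_compat_r|]; unfold eps in *; lra.
Qed.

Lemma HX_D x : HX D phi x -> D x.
Proof. intros []; auto. Qed.

Lemma L_surj_HY C0 : 0 <= C0 -> (forall x, HX D phi x -> norm x <= C0 * norm (L x)) ->
  forall y, HY phi y -> exists w, HX D phi w /\ L w = y.
Proof.
  intros HC0 Hbb y Hy.
  destruct eigenvalue_isolated as [d [Hd Hres]].
  set (mu0 := lam + d / 2).
  destruct (resolvent_op_of D L mu0) as [Rm [C HR]].
  { apply Hres. unfold mu0. replace (lam + d / 2 - lam) with (d / 2) by ring. rewrite Rabs_pos_eq; lra. }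
  pose proof HR as [H1 [_ [HC Hb]]].
  pose proof (resolvent_HY mu0 Rm C HR ltac:(unfold mu0; lra)) as RH.
  pose proof (resolvent_op_linear D L SA _ _ _ HR) as [RLa RLs].
  pose proof (Rabs_pos mu0) as Hmu0.
  (* [L (Rm v) = v + mu0 Rm v] is symmetric and, by the lower bound on [H_X], bounded below *)
  set (Bop := fun v => vadd v (vscal mu0 (Rm v))).
  assert (LB : forall v, L (Rm v) = Bop v).
  { intro v. unfold Bop. rewrite <- (proj2 (H1 v)) at 2. unfold shifted. vec_eq. }
  destruct (bounded_below_symm_surj (HY phi) Bop (/ (1 + Rabs mu0 * C0)) (1 + Rabs mu0 * C)
              (subspace_HY phi) (seq_closed_HY phi)) with y as [v [Hv Bv]]; auto.
  - split; intros; unfold Bop; [rewrite RLa|rewrite RLs]; auto; vec_eq.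
  - intros u v _ _. unfold Bop. autorewrite with vinner.
    rewrite (resolvent_op_symm D L SA _ _ _ HR u v I I), (inner_sym u v). ring.
  - intros v Hv. apply subspace_add, subspace_scal; auto using subspace_HY.
  - apply Rinv_0_lt_compat. nra.
  - apply Rle_trans with 1; [|nra].
    rewrite <- Rinv_1. apply Rinv_le_contravar; nra.
  - intros v Hv. assert (HXv : HX D phi (Rm v)) by (split; [apply H1|apply RH, Hv]).
    pose proof (Hbb _ HXv) as H. rewrite LB in H.
    assert (norm v <= norm (Bop v) + Rabs mu0 * norm (Rm v)).
    { replace v with (vsub (Bop v) (vscal mu0 (Rm v))) at 1 by (unfold Bop; vec_eq).
      rewrite <- norm_scal. apply norm_sub_le. }
    apply (Rmult_le_reg_l (1 + Rabs mu0 * C0)); [nra|].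
    rewrite <- Rmult_assoc, Rinv_r, Rmult_1_l by nra.
    assert (Rabs mu0 * norm (Rm v) <= Rabs mu0 * (C0 * norm (Bop v))) by (apply Rmult_le_compat_l; lra).
    nra.
  - intros v _. unfold Bop. eapply Rle_trans; [apply norm_triangle|]. rewrite norm_scal.
    pose proof (Hb v I). assert (Rabs mu0 * norm (Rm v) <= Rabs mu0 * (C * norm v)) by (apply Rmult_le_compat_l; lra).
    lra.
  - exists (Rm v). split; [split; [apply H1|apply RH, Hv]|]. rewrite LB. exact Bv.
Qed.

Definition inverse_on_HY (G : Y -> Y) : Prop :=
  (forall y, HY phi y -> HX D phi (G y) /\ L (G y) = y) /\
  (forall x, HX D phi x -> G (L x) = x) /\ linear_on (HY phi) G.

Lemma L_inverse_HY C0 : 0 <= C0 -> (forall x, HX D phi x -> norm x <= C0 * norm (L x)) ->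
  exists G, inverse_on_HY G /\ symm_on (HY phi) G /\ bdd_on (HY phi) G C0.
Proof.
  intros HC0 Hbb.
  destruct (choice (fun y w => HY phi y -> HX D phi w /\ L w = y)) as [G HG].
  { intro y. destruct (classic (HY phi y)) as [Hy|Hy].
    - destruct (L_surj_HY C0 HC0 Hbb y Hy) as [w Hw]. exists w; auto.
    - exists vzero. intro; contradiction. }
  pose proof (subspace_HX D phi (SA_sub D L SA)) as SHX. pose proof (subspace_HY phi) as SHY.
  assert (Linj : forall w1 w2, HX D phi w1 -> HX D phi w2 -> L w1 = L w2 -> w1 = w2).
  { intros w1 w2 H1 H2 E. apply norm_sub_eq0.
    pose proof (Hbb (vsub w1 w2) (subspace_sub _ _ _ SHX H1 H2)) as H.
    rewrite (linear_sub D L w1 w2 (SA_sub D L SA) (SA_lin D L SA)), E in H by (apply HX_D; auto).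
    replace (vsub (L w2) (L w2)) with (@vzero Y) in H by vec_eq. rewrite norm_zero in H.
    pose proof (norm_nonneg (vsub w1 w2)). lra. }
  exists G. split; [split; [exact HG|split]|split].
  - intros x Hx. pose proof (L_HY x Hx). apply Linj; [apply HG| |apply HG]; auto.
  - split.
    + intros a b Ha Hb. apply Linj; [apply HG, subspace_add; auto|apply subspace_add; auto; apply HG; auto|].
      rewrite (proj1 (SA_lin D L SA)) by (apply HX_D, HG; auto).
      rewrite (proj2 (HG a Ha)), (proj2 (HG b Hb)). apply HG, subspace_add; auto.
    + intros s a Ha. apply Linj; [apply HG, subspace_scal; auto|apply subspace_scal; auto; apply HG; auto|].
      rewrite (proj2 (SA_lin D L SA)) by (apply HX_D, HG; auto).
      rewrite (proj2 (HG a Ha)). apply HG, subspace_scal; auto.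
  - intros a b Ha Hb. rewrite <- (proj2 (HG b Hb)) at 1.
    rewrite <- (SA_sym D L SA) by (apply HX_D, HG; auto).
    rewrite (proj2 (HG a Ha)). reflexivity.
  - intros a Ha. pose proof (Hbb (G a) (proj1 (HG a Ha))). rewrite (proj2 (HG a Ha)) in H. exact H.
Qed.

Section SpectralGap.
Variable n : R.
Hypotheses (Hn : 0 <= n) (Hspec : forall mu, -n <= mu <= n -> (spectrum D L mu <-> mu = lam)).

Lemma L_bounded_below_HX : exists C0, 0 <= C0 /\
  forall x, HX D phi x -> norm x <= C0 * norm (L x).
Proof.
  assert (NB0 : ~ approx_eigenvalue (HX D phi) L 0).
  { destruct (Req_dec lam 0) as [<-|E].
    - apply (eigenvalue_not_approx_on_HX).
    - intro H. apply (resolvent_not_approx_eigenvalue D L 0).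
      + apply NNPP. intro H2. apply E. symmetry. apply (Hspec 0 ltac:(lra)), H2.
      + apply (approx_eigenvalue_mono _ _ _ _ HX_D H). }
  destruct (not_approx_eigenvalue _ _ _ NB0) as [C0 [HC0 Hbb]].
  exists C0. split; [exact HC0|]. intros x Hx.
  replace (L x) with (vsub (L x) (vscal 0 x)) by vec_eq. apply Hbb, Hx.
Qed.

(* An approximate eigenvalue [b] of [G = L^-1] gives the approximate eigenvalue [1/b] of [L]
   on [H_X]; by (H) and the isolation of [lam], [|1/b|] must exceed [n]. *)
Lemma inverse_approx_eigenvalue_small G b : inverse_on_HY G -> 0 < Rabs b ->
  approx_eigenvalue (HY phi) G b -> n * Rabs b < 1.
Proof.
  intros [HG _] Hb Hnb. apply Rnot_le_lt. intro Hle.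
  assert (Hb0 : b <> 0) by (intro E; rewrite E, Rabs_R0 in Hb; lra).
  assert (T2 : approx_eigenvalue (HX D phi) L (0 + / b)).
  { apply (approx_eigenvalue_inverse L (HY phi) G (HX D phi) 0 b Hb0); [|exact Hnb].
    intros y Hy. split; [apply HG, Hy|]. unfold shifted. rewrite (proj2 (HG y Hy)). vec_eq. }
  assert (Hmu : -n <= 0 + / b <= n).
  { rewrite Rplus_0_l. assert (HA : Rabs (/ b) <= n).
    { rewrite Rabs_inv. apply (Rmult_le_reg_l (Rabs b)); [exact Hb|]. rewrite Rinv_r; lra. }
    pose proof (Rle_abs (/ b)). pose proof (Rle_abs (- / b)). rewrite Rabs_Ropp in *. lra. }
  assert (Hsp : spectrum D L (0 + / b)).
  { intro Hr. apply (resolvent_not_approx_eigenvalue D L _ Hr), (approx_eigenvalue_mono _ _ _ _ HX_D T2). }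
  apply (proj1 (Hspec _ Hmu)) in Hsp. rewrite Hsp in T2.
  exact (eigenvalue_not_approx_on_HX T2).
Qed.

Lemma L_inverse_gap : exists G q, inverse_on_HY G /\ 0 <= q /\ n * q < 1 /\
  forall y, HY phi y -> norm (G y) <= q * norm y.
Proof.
  destruct L_bounded_below_HX as [C0 [HC0 Hbb]].
  destruct (L_inverse_HY C0 HC0 Hbb) as [G [HGi [GS GB]]].
  pose proof HGi as [HG [_ GLin]].
  assert (GM : maps (HY phi) G) by (intros a Ha; apply HG, Ha).
  destruct (numerical_radius_approx_eigenvalue (HY phi) G C0 (subspace_HY phi) GLin GS GM HC0 GB)
    as [q [Hq [Hform Hcase]]].
  exists G, q. split; [exact HGi|]. split; [exact Hq|]. split.
  - destruct Hcase as [->|[Hc|Hc]]; [lra| |];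
      (destruct (Req_dec q 0) as [->|Hq0]; [lra|]).
    + pose proof (inverse_approx_eigenvalue_small G q HGi ltac:(rewrite Rabs_pos_eq; lra) Hc).
      rewrite Rabs_pos_eq in H; lra.
    + pose proof (inverse_approx_eigenvalue_small G (- q) HGi ltac:(rewrite Rabs_Ropp, Rabs_pos_eq; lra) Hc).
      rewrite Rabs_Ropp, Rabs_pos_eq in H; lra.
  - exact (symm_norm_le_num_radius (HY phi) G q (subspace_HY phi) GLin GS GM Hq Hform).
Qed.

End SpectralGap.

Section Fibers.
Variable N : Y -> Y.
Hypotheses (FC : F_continuous D L N) (HV : hyp_V D L N lam phi).

Definition PN (t : R) (w : Y) : Y := Pr phi (N (vadd w (vscal t phi))).

Lemma D_affine w t : D w -> D (vadd w (vscal t phi)).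
Proof.
  intro Dw. pose proof (SA_sub D L SA) as SD.
  apply subspace_add; [exact SD|exact Dw|apply subspace_scal; [exact SD|exact HDphi]].
Qed.

Lemma L_affine w t : D w -> L (vadd w (vscal t phi)) = vadd (L w) (vscal (t * lam) phi).
Proof.
  intro Dw. pose proof (SA_sub D L SA) as SD.
  rewrite (proj1 (SA_lin D L SA)) by (first [exact Dw|apply subspace_scal; [exact SD|exact HDphi]]).
  rewrite (proj2 (SA_lin D L SA)), Lphi by exact HDphi. vec_eq.
Qed.

Lemma graph_dist_affine_le w1 w2 t1 t2 : D w1 -> D w2 ->
  graph_dist L (vadd w1 (vscal t1 phi)) (vadd w2 (vscal t2 phi)) <=
  norm (vsub w1 w2) + norm (vsub (L w1) (L w2)) + (1 + Rabs lam) * Rabs (t1 - t2).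
Proof.
  intros D1 D2. eapply Rle_trans; [apply graph_dist_le|]. rewrite !L_affine by assumption.
  replace (vsub (vadd w1 (vscal t1 phi)) (vadd w2 (vscal t2 phi)))
    with (vadd (vsub w1 w2) (vscal (t1 - t2) phi)) by vec_eq.
  replace (vsub (vadd (L w1) (vscal (t1 * lam) phi)) (vadd (L w2) (vscal (t2 * lam) phi)))
    with (vadd (vsub (L w1) (L w2)) (vscal ((t1 - t2) * lam) phi)) by vec_eq.
  pose proof (norm_triangle (vsub w1 w2) (vscal (t1 - t2) phi)).
  pose proof (norm_triangle (vsub (L w1) (L w2)) (vscal ((t1 - t2) * lam) phi)).
  rewrite !norm_scal, (norm_phi phi Hphi), Rabs_mult in *. lra.
Qed.

Lemma Pr_F_affine w t : HX D phi w ->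
  Pr phi (Fmap L N (vadd w (vscal t phi))) = vsub (L w) (PN t w).
Proof.
  intro Hw. unfold Fmap, PN. rewrite (Pr_sub phi), L_affine by apply Hw.
  rewrite (Pr_add phi), (Pr_phi phi Hphi), (Pr_id phi (L w)) by (apply L_HY, Hw).
  vec_eq.
Qed.

Lemma fiber_D z u : fiber D L N phi z u -> D u.
Proof. intros [t [w [[Dw _] [_ ->]]]]. apply D_affine, Dw. Qed.

Lemma fiber_of_Pr_F z u : D u -> Pr phi (Fmap L N u) = z -> is_u D L N phi z (inner u phi) u.
Proof.
  intros Du Hz. exists (Pr phi u). split; [split|split].
  - pose proof (SA_sub D L SA) as SD. unfold Pr.
    apply subspace_sub; [exact SD|exact Du|apply subspace_scal; [exact SD|exact HDphi]].
  - apply (Pr_HY phi Hphi).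
  - rewrite <- (Pr_decomp phi). exact Hz.
  - apply (Pr_decomp phi).
Qed.

Lemma fiber_param_eq z t w : HX D phi w ->
  Pr phi (Fmap L N (vadd w (vscal t phi))) = z <-> L w = vadd z (PN t w).
Proof.
  intro Hw. rewrite Pr_F_affine by exact Hw.
  split; intro E; [rewrite <- E|rewrite E]; vec_eq.
Qed.

Lemma inner_F_phi u : D u -> inner (Fmap L N u) phi = lam * inner u phi - inner (N u) phi.
Proof.
  intro Du. unfold Fmap. rewrite inner_sub_l, (SA_sym D L SA), Lphi, inner_scal_r
    by auto using HDphi.
  reflexivity.
Qed.

Lemma PN_continuous w t0 : HX D phi w ->
  forall e, 0 < e -> exists d, 0 < d /\
    forall t, Rabs (t - t0) < d -> norm (vsub (PN t w) (PN t0 w)) < e.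
Proof.
  intros Hw e He.
  set (b := vadd w (vscal t0 phi)).
  destruct (FC b (D_affine w t0 (proj1 Hw)) (e / 2) ltac:(lra)) as [d1 [Hd1 HF]].
  pose proof (Rabs_pos lam) as Hlam. pose proof (Rmin_pos d1 (e / 2) Hd1 ltac:(lra)).
  exists (Rmin d1 (e / 2) / (Rabs lam + 1)). split; [apply Rdiv_lt_0_compat; lra|]. intros t Ht.
  set (a := vadd w (vscal t phi)).
  assert (Hsmall : (1 + Rabs lam) * Rabs (t0 - t) < Rmin d1 (e / 2)).
  { rewrite Rabs_minus_sym. apply (Rmult_lt_compat_l (Rabs lam + 1)) in Ht; [|lra].
    replace ((Rabs lam + 1) * (Rmin d1 (e / 2) / (Rabs lam + 1))) with (Rmin d1 (e / 2)) in Ht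
      by (field; lra).
    lra. }
  pose proof (Rmin_l d1 (e / 2)). pose proof (Rmin_r d1 (e / 2)). pose proof (Rabs_pos (t0 - t)).
  assert (Hgd : graph_dist L b a < d1).
  { eapply Rle_lt_trans; [apply graph_dist_affine_le; apply Hw|].
    replace (vsub w w) with (@vzero Y) by vec_eq. replace (vsub (L w) (L w)) with (@vzero Y) by vec_eq.
    rewrite norm_zero. lra. }
  specialize (HF a (D_affine w t (proj1 Hw)) Hgd). unfold distY in HF.
  unfold PN. fold a b. rewrite <- (Pr_sub phi).
  eapply Rle_lt_trans; [apply (Pr_norm phi Hphi)|].
  replace (vsub (N a) (N b)) with (vadd (vopp (vsub (L b) (L a))) (vsub (Fmap L N b) (Fmap L N a)))
    by (unfold Fmap; vec_eq).
  eapply Rle_lt_trans; [apply norm_triangle|].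
  replace (vsub (L b) (L a)) with (vscal ((t0 - t) * lam) phi)
    by (unfold a, b; rewrite !L_affine by apply Hw; vec_eq).
  rewrite norm_opp, norm_scal, (norm_phi phi Hphi), Rabs_mult, norm_sub_sym. nra.
Qed.

(* Along a fiber, [<F u, phi> = lam t - <N u, phi>], which (V+-) push to [-oo] as [|t| -> oo]. *)
Lemma fiber_param_bound z0 s : HY phi z0 ->
  exists r B, 0 < r /\ forall z t u, HY phi z -> distY z z0 < r -> is_u D L N phi z t u ->
    Rabs (inner (Fmap L N u) phi - s) <= 1 -> Rabs t <= B.
Proof.
  intros Hz0. destruct (HV z0 Hz0) as [r [eps [T [cp [cm [Hr [Heps [HT HVz]]]]]]]].
  set (c := Rabs s + 1 + Rabs cp + Rabs cm).
  exists r, (T + c / eps). split; [exact Hr|]. intros z t u Hz Hzr Hu Hs.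
  destruct (HVz z Hz Hzr) as [Vp Vm].
  assert (Hut : inner u phi = t /\ D u).
  { destruct Hu as [w [[Dw Hw] [_ ->]]]. split; [|apply D_affine, Dw].
    autorewrite with vinner. unfold HY in Hw. rewrite Hw, Hphi. ring. }
  rewrite (inner_F_phi u (proj2 Hut)), (proj1 Hut) in Hs.
  assert (Hc : 0 <= c / eps).
  { apply Rmult_le_pos; [unfold c; pose proof (Rabs_pos s); pose proof (Rabs_pos cp);
      pose proof (Rabs_pos cm); lra|apply Rlt_le, Rinv_0_lt_compat; lra]. }
  assert (Hce : eps * (c / eps) = c) by (field; lra).
  pose proof (Rle_abs (lam * t - inner (N u) phi - s)).
  pose proof (Rle_abs (- (lam * t - inner (N u) phi - s))). rewrite Rabs_Ropp in *.
  pose proof (Rle_abs s). pose proof (Rle_abs (- s)). pose proof (Rle_abs cp). pose proof (Rle_abs (- cp)).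
  pose proof (Rle_abs cm). pose proof (Rle_abs (- cm)). rewrite !Rabs_Ropp in *.
  apply Rabs_le. destruct (Rlt_dec T t) as [Hgt|Hngt]; [|destruct (Rlt_dec t (- T)) as [Hlt|Hnlt]].
  - specialize (Vp t u Hgt Hu). split; [lra|]. unfold c in *. nra.
  - specialize (Vm t u Hlt Hu). split; [|lra]. unfold c in *. nra.
  - split; lra.
Qed.

Lemma fiber_proper_of_F_proper z : HY phi z -> F_proper D L N -> fiber_proper D L N phi z.
Proof.
  intros Hz FP K HK.
  pose proof (FP K (compact_in_change_space _ _ _ K distY_pmetric (fun _ _ => I) HK)) as HC.
  apply seqcomp_compact_in; [apply graph_dist_pmetric|intros x []; auto|]. intros x Hx.
  destruct (compact_in_seqcomp _ _ _ (graph_dist_pmetric L) HC x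
              (fun k => conj (fiber_D z _ (proj1 (Hx k))) (proj2 (Hx k))))
    as [p [[Dp Kp] Hcl]].
  exists p. split; [split; [|exact Kp]|exact Hcl].
  destruct (proj1 HK _ Kp) as [s Hs].
  exists (inner p phi). apply (fiber_of_Pr_F z p Dp).
  rewrite Hs, (Pr_add phi), (Pr_phi phi Hphi), (Pr_id phi z Hz). vec_eq.
Qed.

Lemma fiber_decomposition u : D u -> HX D phi (Pr phi u) /\
  L (Pr phi u) = vadd (Pr phi (Fmap L N u)) (PN (inner u phi) (Pr phi u)).
Proof.
  intro Du. destruct (fiber_of_Pr_F _ u Du eq_refl) as [w [Hw [_ Hu]]].
  replace (Pr phi u) with w by (rewrite Hu, (Pr_add phi), (Pr_phi phi Hphi), (Pr_id phi w (proj2 Hw)); vec_eq).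
  split; [exact Hw|]. apply (fiber_param_eq _ _ w Hw). rewrite <- Hu. reflexivity.
Qed.

Lemma fiber_params_eventually_bounded (u : nat -> Y) p : (forall k, D (u k)) ->
  conv distY p (fun k => Fmap L N (u k)) ->
  exists J B, forall k, (J <= k)%nat -> Rabs (inner (u k) phi) <= B.
Proof.
  intros Du Hconv.
  destruct (fiber_param_bound (Pr phi p) (inner p phi) (Pr_HY phi Hphi p)) as [r [B [Hr HB]]].
  destruct (Hconv (Rmin r 1) ltac:(apply Rmin_pos; lra)) as [J HJ].
  pose proof (Rmin_l r 1). pose proof (Rmin_r r 1).
  exists J, B. intros k Hk. specialize (HJ k Hk).
  apply (HB (Pr phi (Fmap L N (u k))) _ (u k)); [apply (Pr_HY phi Hphi)| | |].
  - pose proof (Pr_distY_le phi Hphi p (Fmap L N (u k))). rewrite distY_sym. lra.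
  - apply fiber_of_Pr_F; [apply Du|reflexivity].
  - rewrite <- inner_sub_l. eapply Rle_trans; [apply (inner_phi_le phi Hphi)|].
    rewrite norm_sub_sym. fold (distY p (Fmap L N (u k))). lra.
Qed.

Variables (n q : R) (G : Y -> Y).
Hypotheses (Hn : 0 <= n) (Hq : 0 <= q) (Hnq : n * q < 1)
  (Lip : forall t w1 w2, HY phi w1 -> HY phi w2 -> norm (vsub (PN t w1) (PN t w2)) <= n * norm (vsub w1 w2))
  (HGi : inverse_on_HY G) (HGb : forall y, HY phi y -> norm (G y) <= q * norm y).

(* [w = G (z + PN_t w)] is a fixed point problem for a contraction of ratio [q n < 1]. *)
Lemma fiber_point_exists z t : HY phi z -> exists w, HX D phi w /\ L w = vadd z (PN t w).
Proof.
  intro Hz. destruct HGi as [HG [_ GLin]].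
  assert (HzP : forall w, HY phi (vadd z (PN t w)))
    by (intro w; apply subspace_add; [apply subspace_HY|exact Hz|apply (Pr_HY phi Hphi)]).
  destruct (contraction_fixpoint (HY phi) (fun w => G (vadd z (PN t w))) (q * n) (subspace_HY phi)
              (seq_closed_HY phi)) as [w [Hw Hfix]].
  - split; [apply Rmult_le_pos|]; lra.
  - intros a _. apply HG, HzP.
  - intros a b Ha Hb. rewrite <- (linear_sub (HY phi) G) by (auto using subspace_HY).
    eapply Rle_trans; [apply HGb, subspace_sub; auto using subspace_HY|].
    replace (vsub (vadd z (PN t a)) (vadd z (PN t b))) with (vsub (PN t a) (PN t b)) by vec_eq.
    rewrite Rmult_assoc. apply Rmult_le_compat_l; [exact Hq|apply Lip; auto].
  - exists w. split; [rewrite <- Hfix; apply HG, HzP|].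
    rewrite <- Hfix at 1. apply HG, HzP.
Qed.

Lemma fiber_point_stable w1 w2 z1 z2 t1 t2 : HX D phi w1 -> HX D phi w2 ->
  L w1 = vadd z1 (PN t1 w1) -> L w2 = vadd z2 (PN t2 w2) ->
  norm (vsub (L w1) (L w2)) <= (norm (vsub z1 z2) + norm (vsub (PN t1 w2) (PN t2 w2))) / (1 - n * q) /\
  norm (vsub w1 w2) <= q * norm (vsub (L w1) (L w2)).
Proof.
  intros H1 H2 E1 E2. destruct HGi as [_ [GL _]].
  pose proof (subspace_HX D phi (SA_sub D L SA)) as SHX.
  assert (Hb2 : norm (vsub w1 w2) <= q * norm (vsub (L w1) (L w2))).
  { rewrite <- (linear_sub D L w1 w2 (SA_sub D L SA) (SA_lin D L SA)) by (apply H1 || apply H2).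
    rewrite <- (GL (vsub w1 w2)) at 1 by (apply subspace_sub; auto).
    apply HGb, L_HY, subspace_sub; auto. }
  split; [|exact Hb2].
  assert (Hm : norm (vsub (L w1) (L w2)) <=
      norm (vsub z1 z2) + n * (q * norm (vsub (L w1) (L w2))) + norm (vsub (PN t1 w2) (PN t2 w2))).
  { rewrite E1, E2 at 1.
    replace (vsub (vadd z1 (PN t1 w1)) (vadd z2 (PN t2 w2)))
      with (vadd (vadd (vsub z1 z2) (vsub (PN t1 w1) (PN t1 w2))) (vsub (PN t1 w2) (PN t2 w2))) by vec_eq.
    eapply Rle_trans; [apply norm_triangle|]. apply Rplus_le_compat_r.
    eapply Rle_trans; [apply norm_triangle|]. apply Rplus_le_compat_l.
    eapply Rle_trans; [apply Lip; [apply H1|apply H2]|]. apply Rmult_le_compat_l; lra. }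
  apply (Rmult_le_reg_r (1 - n * q)); [lra|].
  unfold Rdiv. rewrite Rmult_assoc, Rinv_l, Rmult_1_r by lra. lra.
Qed.

Lemma fiber_limit (w z : nat -> Y) (t : nat -> R) z0 tau :
  (forall j, HX D phi (w j)) -> (forall j, L (w j) = vadd (z j) (PN (t j) (w j))) ->
  HY phi z0 -> conv distY z0 z -> conv (fun a b => Rabs (a - b)) tau t ->
  exists us, D us /\ conv (graph_dist L) us (fun j => vadd (w j) (vscal (t j) phi)).
Proof.
  intros HXw Heq Hz0 Hzc Htc.
  destruct (fiber_point_exists z0 tau Hz0) as [ws [HXws Heqs]].
  exists (vadd ws (vscal tau phi)). split; [apply D_affine, HXws|].
  intros e He. pose proof (Rabs_pos lam).
  set (c1 := 2 * (1 + q) / (1 - n * q) + (1 + Rabs lam) + 1).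
  assert (Hk : 0 <= 2 * (1 + q) / (1 - n * q)) by (apply Rmult_le_pos; [lra|apply Rlt_le, Rinv_0_lt_compat; lra]).
  set (eta := e / c1).
  assert (Heta : 0 < eta) by (apply Rdiv_lt_0_compat; unfold c1; lra).
  destruct (PN_continuous ws tau HXws eta Heta) as [dl [Hdl HPN]].
  destruct (Htc (Rmin eta dl) ltac:(apply Rmin_pos; lra)) as [M1 HM1].
  destruct (Hzc eta Heta) as [M2 HM2].
  exists (max M1 M2). intros j Hj.
  specialize (HM1 j ltac:(lia)). specialize (HM2 j ltac:(lia)). unfold distY in HM2.
  rewrite Rabs_minus_sym in HM1. pose proof (Rmin_l eta dl). pose proof (Rmin_r eta dl).
  destruct (fiber_point_stable (w j) ws (z j) z0 (t j) tau
              (HXw j) HXws (Heq j) Heqs) as [S1 S2].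
  set (Mj := norm (vsub (L (w j)) (L ws))) in *.
  assert (HMj : Mj <= 2 * eta / (1 - n * q)).
  { eapply Rle_trans; [exact S1|]. unfold Rdiv. apply Rmult_le_compat_r; [apply Rlt_le, Rinv_0_lt_compat; lra|].
    assert (norm (vsub (PN (t j) ws) (PN tau ws)) < eta) by (apply HPN; lra).
    rewrite norm_sub_sym in HM2. lra. }
  eapply Rle_lt_trans; [apply graph_dist_affine_le; [apply HXws|apply HXw]|].
  rewrite (norm_sub_sym ws), (norm_sub_sym (L ws)). fold Mj.
  rewrite Rabs_minus_sym. pose proof (Rabs_pos (t j - tau)).
  assert (e = c1 * eta) by (unfold eta; field; unfold c1; lra).
  assert ((1 + q) * Mj <= 2 * (1 + q) / (1 - n * q) * eta).
  { replace (2 * (1 + q) / (1 - n * q) * eta) with ((1 + q) * (2 * eta / (1 - n * q))) by (field; lra).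
    apply Rmult_le_compat_l; lra. }
  assert ((1 + Rabs lam) * Rabs (t j - tau) <= (1 + Rabs lam) * eta) by (apply Rmult_le_compat_l; lra).
  unfold c1 in *. nra.
Qed.

Lemma F_limit_unique us (v : nat -> Y) p : D us -> (forall k, D (v k)) ->
  conv (graph_dist L) us v -> conv distY p (fun k => Fmap L N (v k)) -> Fmap L N us = p.
Proof.
  intros Dus Dv Hgc Hpc. apply norm_sub_eq0, Rnonneg_small_eq0; [apply norm_nonneg|]. intros e He.
  destruct (FC us Dus (e / 2) ltac:(lra)) as [dl [Hdl HFd]].
  destruct (Hgc dl Hdl) as [M1 HM1]. destruct (Hpc (e / 2) ltac:(lra)) as [M2 HM2].
  specialize (HFd (v (max M1 M2)) (Dv _) (HM1 _ (Nat.le_max_l _ _))).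
  specialize (HM2 _ (Nat.le_max_r M1 M2)). unfold distY in *.
  pose proof (norm_sub_tri (Fmap L N us) (Fmap L N (v (max M1 M2))) p).
  rewrite norm_sub_sym in HFd, HM2. lra.
Qed.

(* Sequential properness: write [u_k = w_k + t_k phi]; (V+-) bound [t_k], and along a
   subsequence with [t_k -> tau] the fiber points converge to [u(P p, tau)]. *)
Lemma preimage_cluster (u : nat -> Y) p : (forall k, D (u k)) ->
  conv distY p (fun k => Fmap L N (u k)) ->
  exists us, D us /\ Fmap L N us = p /\ cluster (graph_dist L) us u.
Proof.
  intros Du Hconv.
  destruct (fiber_params_eventually_bounded u p Du Hconv) as [J [B HB]].
  destruct (real_bounded_cluster (fun i => inner (u (J + i)%nat) phi) B) as [tau Htau];
    [intro i; apply HB; lia|].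
  destruct (cluster_subseq_conv _ _ _ Htau) as [rh [Hrh Htc]].
  set (jj := fun i => (J + rh i)%nat).
  assert (Hjj : forall i, (i <= jj i)%nat) by (intro i; unfold jj; specialize (Hrh i); lia).
  pose proof (conv_subseq _ _ _ jj Hjj Hconv) as Hconv'.
  destruct (fiber_limit (fun i => Pr phi (u (jj i))) (fun i => Pr phi (Fmap L N (u (jj i))))
              (fun i => inner (u (jj i)) phi) (Pr phi p) tau) as [us [Dus Hus]];
    [intro i; apply fiber_decomposition, Du|intro i; apply fiber_decomposition, Du|
     apply (Pr_HY phi Hphi)| |exact Htc|].
  - intros e He. destruct (Hconv' e He) as [M HM]. exists M. intros k Hk.
    eapply Rle_lt_trans; [apply (Pr_distY_le phi Hphi)|apply HM, Hk].
  - assert (Hus' : conv (graph_dist L) us (fun i => u (jj i))).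
    { intros e He. destruct (Hus e He) as [M HM]. exists M. intros k Hk.
      rewrite (Pr_decomp phi (u (jj k))). apply HM, Hk. }
    exists us. split; [exact Dus|]. split.
    + exact (F_limit_unique us (fun i => u (jj i)) p Dus (fun i => Du (jj i)) Hus' Hconv').
    + apply (cluster_of_subseq _ _ _ jj Hjj), conv_cluster, Hus'.
Qed.

Lemma F_proper_of_V : F_proper D L N.
Proof.
  intros K HK. apply seqcomp_compact_in; [apply graph_dist_pmetric|intros x []; auto|].
  intros u Hu.
  destruct (compact_in_seqcomp _ _ _ distY_pmetric HK (fun k => Fmap L N (u k)) (fun k => proj2 (Hu k)))
    as [p [Kp Hcl]].
  destruct (cluster_subseq_conv _ _ _ Hcl) as [sg [Hsg Hconv]].
  destruct (preimage_cluster (fun j => u (sg j)) p (fun j => proj1 (Hu (sg j))) Hconv)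
    as [us [Dus [Fus Hus]]].
  exists us. split; [split; [exact Dus|rewrite Fus; exact Kp]|].
  exact (cluster_of_subseq _ _ _ sg Hsg Hus).
Qed.

End Fibers.

End Eigenvalue.

Theorem mainTheorem9 (Y : RHilbert) (D : Y -> Prop) (L N : Y -> Y)
    (lam : R) (phi : Y) :
  self_adjoint D L ->
  simple_isolated_eigenvalue D L lam phi ->
  F_continuous D L N ->
  hyp_H D L N lam phi ->
  hyp_V D L N lam phi ->
  (F_proper D L N <-> forall z, HY phi z -> fiber_proper D L N phi z).
Proof.
  intros SA EIG FC [n [Hn [Lip Hspec]]] HV.
  destruct (L_inverse_gap D L lam phi SA EIG n Hn Hspec) as [G [q [HGi [Hq [Hnq HGb]]]]].
  pose proof (F_proper_of_V D L lam phi SA EIG N FC HV n q G Hn Hq Hnq Lip HGi HGb) as FP.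
  split.
  - intros _ z Hz. exact (fiber_proper_of_F_proper D L lam phi SA EIG N z Hz FP).
  - intros _. exact FP.
Qed.
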